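(* Let $\alpha_1,\alpha_2>0$ satisfy $\alpha_1-\alpha_2\ge e^2$. Let $p$ be analytic in $\mathbb{D}$ with $p(0)=1$. If $$1+\alpha_1 zp'(z)+\alpha_2 z^2p''(z)\prec 1+ze^z,$$ then $p(z)\prec e^z$.
   Context: $\mathbb{D}$ is the open unit disk. For $g,h$ analytic in $\mathbb{D}$, $g\prec h$ means there is an analytic $w:\mathbb{D}\to\mathbb{D}$ with $w(0)=0$ and $g=h\circ w$. *)

From Stdlib Require Import Reals.
From Coquelicot Require Import Coquelicot.
Open Scope R_scope.

Definition in_disk (z : C) : Prop := Cmod z < 1.

(* Analytic (= holomorphic) on the unit disk: complex differentiable at
   every point of the disk (derivative taken over the field C). *)
Definition holo_on_disk (f : C -> C) : Prop :=
  forall z : C, in_disk z -> @ex_derive C_AbsRing C_NormedModule f z.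

Definition cexp (z : C) : C :=
  Cmult (RtoC (exp (Re z))) (cos (Im z), sin (Im z)).

Definition subordinate (g h : C -> C) : Prop :=
  exists w : C -> C,
    holo_on_disk w /\
    (forall z, in_disk z -> in_disk (w z)) /\
    w (RtoC 0) = RtoC 0 /\
    (forall z, in_disk z -> g z = h (w z)).

From Stdlib Require Import Reals Lra Psatz ClassicalEpsilon Classical.
From Coquelicot Require Import Coquelicot.
Open Scope R_scope.

(* Put u = p - 1 and q = a1 z u' + a2 z² u''.  The hypothesis writes q as
   w e^w with |w| < 1, so |q| < e on the unit disk D.  The heart of the
   proof is a weighted maximum principle showing |u|² < 1/5 on D: for
   |z| = r < 1, maximize Φ(w) = |u(w)|² W(|w|), W(x) = x^{-7/4} e^{x²/100},
   over the closed disk |w| ≤ r (Φ vanishes at 0 since u(0) = 0).  At a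
   maximizer z1 ≠ 0, with N = |u|², X = ⟨u, z u'⟩, Y = ⟨u, z² u''⟩ and
   P = |z u'|², the angular first- and second-order conditions give
   X² = N P and P ≤ X + Y.  If |z1| = r, the radial condition forces
   X ≥ 0.865 N and then e² X ≤ (a1 - a2) X ≤ ⟨u, q⟩ < √N e yields N < 1/5;
   if |z1| < r, the two radial conditions contradict each other.  Finally
   |p - 1|² < 1/5 puts p in the right half-plane, so w = log p is a
   holomorphic self-map of D with w(0) = 0 and p = e^w. *)

(** * Real-variable facts *)

Lemma derivable_pt_lim_of_little_o (f : R -> R) t l :
  (forall eps, 0 < eps -> exists del, 0 < del /\
     forall h, Rabs h < del -> Rabs (f (t + h) - f t - h * l) <= eps * Rabs h) ->
  derivable_pt_lim f t l.
Proof.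
intros H eps Heps. destruct (H (eps/2)) as [del [Hd Hdel]]; [lra|].
exists (mkposreal del Hd). intros h Hh0 Hh. simpl in Hh.
specialize (Hdel h Hh).
replace ((f (t + h) - f t) / h - l) with ((f (t + h) - f t - h * l) / h) by (field; auto).
rewrite Rabs_div by auto. apply Rabs_pos_lt in Hh0.
apply (Rmult_lt_reg_r (Rabs h)); [lra|]. unfold Rdiv. rewrite Rmult_assoc, Rinv_l by lra. nra.
Qed.

Lemma little_o_of_derivable_pt_lim (f : R -> R) t l : derivable_pt_lim f t l ->
  forall eps, 0 < eps -> exists del, 0 < del /\
     forall h, Rabs h < del -> Rabs (f (t + h) - f t - h * l) <= eps * Rabs h.
Proof.
intros H eps Heps. destruct (H eps Heps) as [del Hdel].
exists del. split; [apply cond_pos|]. intros h Hh.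
destruct (Req_dec h 0) as [->|Hh0].
- rewrite Rplus_0_r. replace (f t - f t - 0 * l) with 0 by ring. rewrite Rabs_R0. lra.
- specialize (Hdel h Hh0 Hh).
  replace (f (t + h) - f t - h * l) with (((f (t + h) - f t) / h - l) * h) by (field; auto).
  rewrite Rabs_mult. apply Rmult_le_compat_r; [apply Rabs_pos|lra].
Qed.

Lemma deriv_nonneg_at_left_max (g : R -> R) t0 l del : 0 < del -> is_derive g t0 l ->
  (forall h, 0 < h < del -> g (t0 - h) <= g t0) -> 0 <= l.
Proof.
intros Hd Hg Hm. apply is_derive_Reals in Hg.
destruct (Rle_lt_dec 0 l) as [|Hl]; [auto|exfalso].
destruct (little_o_of_derivable_pt_lim _ _ _ Hg (-l/2)) as [e [He Hde]]; [lra|].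
set (h := Rmin e del / 2).
assert (Hh : 0 < h) by (unfold h; apply Rdiv_lt_0_compat; [apply Rmin_pos|]; lra).
assert (Hh1 : h < e) by (unfold h; pose proof (Rmin_l e del); lra).
assert (Hh2 : h < del) by (unfold h; pose proof (Rmin_r e del); lra).
specialize (Hde (-h)). rewrite Rabs_Ropp, Rabs_pos_eq in Hde by lra. specialize (Hde Hh1).
specialize (Hm h (conj Hh Hh2)). replace (t0 + - h) with (t0 - h) in Hde by ring.
apply Rabs_le_between in Hde. nra.
Qed.

Lemma deriv_nonpos_at_right_max (g : R -> R) t0 l del : 0 < del -> is_derive g t0 l ->
  (forall h, 0 < h < del -> g (t0 + h) <= g t0) -> l <= 0.
Proof.
intros Hd Hg Hm. apply is_derive_Reals in Hg.
destruct (Rle_lt_dec l 0) as [|Hl]; [auto|exfalso].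
destruct (little_o_of_derivable_pt_lim _ _ _ Hg (l/2)) as [e [He Hde]]; [lra|].
set (h := Rmin e del / 2).
assert (Hh : 0 < h) by (unfold h; apply Rdiv_lt_0_compat; [apply Rmin_pos|]; lra).
assert (Hh1 : h < e) by (unfold h; pose proof (Rmin_l e del); lra).
assert (Hh2 : h < del) by (unfold h; pose proof (Rmin_r e del); lra).
specialize (Hde h). rewrite Rabs_pos_eq in Hde by lra. specialize (Hde Hh1).
specialize (Hm h (conj Hh Hh2)).
apply Rabs_le_between in Hde. nra.
Qed.

Lemma deriv_zero_at_local_max (g g' : R -> R) t0 del : 0 < del ->
  (forall t, Rabs (t - t0) < del -> is_derive g t (g' t)) ->
  (forall t, Rabs (t - t0) < del -> g t <= g t0) -> g' t0 = 0.
Proof.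
intros Hd Hg Hm.
assert (H0 : is_derive g t0 (g' t0)) by (apply Hg; rewrite Rminus_diag, Rabs_R0; lra).
apply Rle_antisym.
- apply (deriv_nonpos_at_right_max g t0 _ del Hd H0). intros h Hh. apply Hm.
  replace (t0 + h - t0) with h by ring. rewrite Rabs_pos_eq; lra.
- apply (deriv_nonneg_at_left_max g t0 _ del Hd H0). intros h Hh. apply Hm.
  replace (t0 - h - t0) with (-h) by ring. rewrite Rabs_Ropp, Rabs_pos_eq; lra.
Qed.

(* Second-order condition at an interior local maximum: g'' ≤ 0.  If
   g'' > 0, then g' > 0 just right of t0 and the mean value theorem
   makes g increase there. *)
Lemma second_deriv_nonpos_at_local_max (g g' : R -> R) t0 d del : 0 < del ->
  (forall t, Rabs (t - t0) < del -> is_derive g t (g' t)) -> is_derive g' t0 d ->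
  (forall t, Rabs (t - t0) < del -> g t <= g t0) -> d <= 0.
Proof.
intros Hd Hg Hg' Hm.
pose proof (deriv_zero_at_local_max g g' t0 del Hd Hg Hm) as Z.
destruct (Rle_lt_dec d 0) as [|Hdp]; [auto|exfalso].
apply is_derive_Reals in Hg'.
destruct (little_o_of_derivable_pt_lim _ _ _ Hg' (d/2)) as [e [He Hde]]; [lra|].
set (h := Rmin e del / 2).
assert (Hh : 0 < h) by (unfold h; apply Rdiv_lt_0_compat; [apply Rmin_pos|]; lra).
assert (Hh1 : h < e) by (unfold h; pose proof (Rmin_l e del); lra).
assert (Hh2 : h < del) by (unfold h; pose proof (Rmin_r e del); lra).
assert (Pos : forall s, 0 < s <= h -> 0 < g' (t0 + s)).
{ intros s Hs. specialize (Hde s). rewrite Rabs_pos_eq in Hde by lra.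
  specialize (Hde ltac:(lra)). rewrite Z in Hde. apply Rabs_le_between in Hde. nra. }
assert (MV : forall a b, t0 <= a < b -> b <= t0 + h ->
          exists c, a <= c <= b /\ g b - g a = g' c * (b - a)).
{ intros a b Hab Hb. destruct (MVT_gen g a b g') as [c [Hc Hc2]].
  - intros x Hx. rewrite Rmin_left in Hx by lra. rewrite Rmax_right in Hx by lra.
    apply Hg. apply Rabs_def1; lra.
  - intros x Hx. rewrite Rmin_left in Hx by lra. rewrite Rmax_right in Hx by lra.
    apply derivable_continuous_pt. exists (g' x). apply is_derive_Reals. apply Hg.
    apply Rabs_def1; lra.
  - rewrite Rmin_left in Hc by lra. rewrite Rmax_right in Hc by lra. exists c; split; auto. }
destruct (MV t0 (t0 + h/2)) as [c1 [Hc1 E1]]; [lra|lra|].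
destruct (MV (t0 + h/2) (t0 + h)) as [c2 [Hc2 E2]]; [lra|lra|].
assert (P1 : 0 <= g' c1).
{ destruct (Req_dec c1 t0) as [->|Hc]; [lra|].
  replace c1 with (t0 + (c1 - t0)) by ring. left; apply Pos; lra. }
assert (P2 : 0 < g' c2) by (replace c2 with (t0 + (c2 - t0)) by ring; apply Pos; lra).
assert (Hm2 : g (t0 + h) <= g t0)
  by (apply Hm; replace (t0 + h - t0) with h by ring; rewrite Rabs_pos_eq; lra).
nra.
Qed.

Lemma lipschitz_of_deriv_bound (f df : R -> R) a b :
  (forall x, is_derive f x (df x)) -> (forall x, Rabs (df x) <= 1) ->
  Rabs (f a - f b) <= Rabs (a - b).
Proof.
intros Hf Hd. destruct (MVT_gen f b a df) as [c [_ Hc]].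
- intros; apply Hf.
- intros x _. apply derivable_continuous_pt. exists (df x). apply is_derive_Reals, Hf.
- rewrite Hc, Rabs_mult. rewrite <- (Rmult_1_l (Rabs (a - b))) at 2.
  apply Rmult_le_compat_r; [apply Rabs_pos|apply Hd].
Qed.

Lemma cos_lipschitz a b : Rabs (cos a - cos b) <= Rabs (a - b).
Proof.
apply (lipschitz_of_deriv_bound cos (fun x => - sin x)).
- intros; apply is_derive_Reals, derivable_pt_lim_cos.
- intros; rewrite Rabs_Ropp. pose proof (SIN_bound x). apply Rabs_le; lra.
Qed.

Lemma sin_lipschitz a b : Rabs (sin a - sin b) <= Rabs (a - b).
Proof.
apply (lipschitz_of_deriv_bound sin cos).
- intros; apply is_derive_Reals, derivable_pt_lim_sin.
- intros. pose proof (COS_bound x). apply Rabs_le; lra.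
Qed.

Lemma Rabs_atan_le t : Rabs (atan t) <= Rabs t.
Proof.
pose proof (lipschitz_of_deriv_bound atan (fun x => / (1 + x^2)) t 0) as H.
rewrite atan_0, !Rminus_0_r in H. apply H.
- intros x. apply is_derive_Reals, derivable_pt_lim_atan.
- intros x. rewrite Rabs_pos_eq. 2:{ apply Rlt_le, Rinv_0_lt_compat. nra. }
  rewrite <- Rinv_1. apply Rinv_le_contravar; [lra|]. nra.
Qed.

Lemma exp_INR_mult x n : exp (INR n * x) = exp x ^ n.
Proof.
induction n as [|n IH]; simpl.
- rewrite Rmult_0_l, exp_0. reflexivity.
- rewrite <- IH, <- exp_plus. f_equal. destruct n; simpl; ring.
Qed.

Lemma exp_1_lower_bound : 26/10 <= exp 1.
Proof.
replace 1 with (INR 16 * (1/16)) by (simpl; field). rewrite exp_INR_mult.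
assert (H : 1 + 1/16 < exp (1/16)) by (apply exp_ineq1; lra).
apply (Rle_trans _ ((17/16)^16)).
{ replace ((17/16)^16) with (48661191875666868481/18446744073709551616) by (simpl; field). lra. }
apply pow_incr. lra.
Qed.

Lemma exp_17_10_lower_bound : 442/100 <= exp (17/10).
Proof.
replace (17/10) with (1 + 7/10) by field. rewrite exp_plus.
pose proof exp_1_lower_bound. pose proof (exp_ineq1 (7/10) ltac:(lra)).
pose proof (exp_pos (7/10)). nra.
Qed.

Definition jointly_continuous (F : R -> R -> R) : Prop :=
  forall x y eps, 0 < eps -> exists del, 0 < del /\
    forall x' y', Rabs (x' - x) < del -> Rabs (y' - y) < del ->
      Rabs (F x' y' - F x y) < eps.

(* If ym x maximizes y ↦ F x y on [c, d] for each x, the marginal maximum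
   x ↦ F x (ym x) is continuous; the upper estimate uses a finite
   subcover of [c, d] (compactness_value_1d). *)
Lemma marginal_max_continuous (F : R -> R -> R) c d (ym : R -> R) :
  jointly_continuous F ->
  (forall x, c <= ym x <= d /\ forall y, c <= y <= d -> F x y <= F x (ym x)) ->
  forall x, continuity_pt (fun x => F x (ym x)) x.
Proof.
intros HF Hym x eps Heps.
destruct (HF x (ym x) eps Heps) as [d1 [Hd1 Hdel1]].
assert (Hdel : forall y, exists del, 0 < del /\ forall x' y', Rabs (x' - x) < del ->
           Rabs (y' - y) < del -> Rabs (F x' y' - F x y) < eps)
  by (intros y; apply HF; exact Heps).
set (dl := fun y => proj1_sig (constructive_indefinite_description _ (Hdel y))).
assert (Hdl : forall y, 0 < dl y /\ forall x' y', Rabs (x' - x) < dl y ->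
           Rabs (y' - y) < dl y -> Rabs (F x' y' - F x y) < eps).
{ intros y. unfold dl. destruct (constructive_indefinite_description _ (Hdel y)) as [e He].
  exact He. }
destruct (compactness_value_1d c d (fun y => mkposreal (dl y) (proj1 (Hdl y)))) as [dd Hdd].
exists (Rmin d1 dd). split. { apply Rmin_pos; [lra|apply cond_pos]. }
intros x' [_ Hx']. unfold R_dist in *. simpl in *. unfold R_dist in Hx'.
assert (Hx1 : Rabs (x' - x) < d1) by (eapply Rlt_le_trans; [exact Hx'|apply Rmin_l]).
assert (Hx2 : Rabs (x' - x) < dd) by (eapply Rlt_le_trans; [exact Hx'|apply Rmin_r]).
assert (Lower : F x (ym x) - eps < F x' (ym x')).
{ destruct (Hym x') as [_ H1]. specialize (H1 (ym x) (proj1 (Hym x))).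
  specialize (Hdel1 x' (ym x) Hx1). rewrite Rminus_diag, Rabs_R0 in Hdel1.
  specialize (Hdel1 Hd1). apply Rabs_def2 in Hdel1. lra. }
assert (Upper : F x' (ym x') < F x (ym x) + eps).
{ destruct (Hym x') as [Hc _]. specialize (Hdd (ym x') Hc).
  apply NNPP. intro Hn. apply Hdd. intros [t [Ht [Ht1 Ht2]]]. apply Hn.
  simpl in Ht1, Ht2. destruct (Hdl t) as [_ Ht3].
  assert (Hxt : Rabs (x' - x) < dl t) by lra.
  specialize (Ht3 x' (ym x') Hxt).
  assert (Hyt : Rabs (ym x' - t) < dl t) by lra.
  specialize (Ht3 Hyt). apply Rabs_def2 in Ht3.
  destruct (Hym x) as [_ Hx3]. specialize (Hx3 t Ht). lra. }
apply Rabs_def1; lra.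
Qed.

Lemma extreme_value_rectangle (F : R -> R -> R) a b c d : a <= b -> c <= d ->
  jointly_continuous F ->
  exists x0 y0, a <= x0 <= b /\ c <= y0 <= d /\
    forall x y, a <= x <= b -> c <= y <= d -> F x y <= F x0 y0.
Proof.
intros Hab Hcd HF.
assert (Hy : forall x, exists y, c <= y <= d /\ forall y', c <= y' <= d -> F x y' <= F x y).
{ intros x. destruct (continuity_ab_maj (F x) c d Hcd) as [y [H1 H2]].
  - intros y _ eps Heps. destruct (HF x y eps Heps) as [del [Hd Hdel]].
    exists del. split; [lra|]. intros y' [_ Hy']. unfold R_dist in *. simpl in *.
    unfold R_dist in Hy'. apply Hdel; [rewrite Rminus_diag, Rabs_R0; lra|exact Hy'].
  - exists y. split; [lra|exact H1]. }
set (ym := fun x => proj1_sig (constructive_indefinite_description _ (Hy x))).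
assert (Hym : forall x, c <= ym x <= d /\ forall y, c <= y <= d -> F x y <= F x (ym x)).
{ intros x. unfold ym. destruct (constructive_indefinite_description _ (Hy x)) as [y Hy'].
  exact Hy'. }
destruct (continuity_ab_maj (fun x => F x (ym x)) a b Hab
            (fun x _ => marginal_max_continuous F c d ym HF Hym x)) as [x0 [H1 H2]].
exists x0, (ym x0). split; [exact H2|]. split; [apply Hym|].
intros x y Hx Hy'. specialize (H1 x Hx).
destruct (Hym x) as [_ H3]. specialize (H3 y Hy'). simpl in H1. lra.
Qed.

(** * Complex preliminaries *)

Notation is_derive_C f z l := (@is_derive C_AbsRing C_NormedModule f z l).

Lemma Cmod_Im_le z : Rabs (Im z) <= Cmod z.
Proof. apply (Rle_trans _ _ _ (Rmax_r (Rabs (fst z)) _)). apply Rmax_Cmod. Qed.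

Lemma Cmod_le_Re_Im z : Cmod z <= Rabs (Re z) + Rabs (Im z).
Proof.
destruct z as [x y]. unfold Cmod, Re, Im; simpl.
pose proof (Rabs_pos x); pose proof (Rabs_pos y).
apply Rsqr_incr_0_var; [|lra].
rewrite Rsqr_sqrt by nra. unfold Rsqr. rewrite !Rmult_1_r.
assert (x * x = Rabs x * Rabs x) by (rewrite <- Rabs_mult, Rabs_pos_eq; nra).
assert (y * y = Rabs y * Rabs y) by (rewrite <- Rabs_mult, Rabs_pos_eq; nra).
nra.
Qed.

Lemma Cmod_reverse_triangle a b : Rabs (Cmod a - Cmod b) <= Cmod (a - b)%C.
Proof.
apply Rabs_le. split.
- pose proof (Cmod_triangle (b - a)%C a) as H. replace (b - a + a)%C with b in H by ring.
  replace (b - a)%C with (- (a - b))%C in H by ring. rewrite Cmod_opp in H. lra.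
- pose proof (Cmod_triangle (a - b)%C b) as H. replace (a - b + b)%C with a in H by ring. lra.
Qed.

Definition dot (a b : C) : R := Re a * Re b + Im a * Im b.

Lemma dot_sym a b : dot a b = dot b a.
Proof. unfold dot; ring. Qed.

Lemma dot_scal_r a b r : dot a (RtoC r * b)%C = r * dot a b.
Proof. unfold dot, Re, Im; simpl; ring. Qed.

Lemma dot_scal_l a b r : dot (RtoC r * a)%C b = r * dot a b.
Proof. unfold dot, Re, Im; simpl; ring. Qed.

Lemma dot_Cmod a : dot a a = (Cmod a)^2.
Proof. rewrite Cmod2_alt. unfold dot. ring. Qed.

Lemma dot_nonneg a : 0 <= dot a a.
Proof. unfold dot. nra. Qed.

(* Pythagoras for the orthogonal pair (b, i b); it yields Cauchy–Schwarz. *)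
Lemma dot_rotation a b : (dot a b)^2 + (dot a (Ci * b)%C)^2 = dot a a * dot b b.
Proof. unfold dot, Re, Im; simpl; ring. Qed.

Lemma dot_cauchy_schwarz a b : (dot a b)^2 <= dot a a * dot b b.
Proof. rewrite <- dot_rotation. pose proof (pow2_ge_0 (dot a (Ci * b)%C)). lra. Qed.

Lemma is_derive_C_little_o (f : C -> C) z l : is_derive_C f z l ->
  forall eps, 0 < eps -> exists del, 0 < del /\
    forall h, Cmod h < del -> Cmod (f (z + h) - f z - h * l)%C <= eps * Cmod h.
Proof.
unfold is_derive, filterdiff. intros [_ H] eps Heps.
specialize (H z (fun P HP => HP) (mkposreal eps Heps)).
destruct H as [del Hdel]. exists del. split; [apply cond_pos|].
intros h Hh. specialize (Hdel (z + h)%C).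
assert (Hm : minus (z + h)%C z = h).
{ unfold minus, plus, opp; simpl. apply injective_projections; simpl; ring. }
assert (Hb : ball z del (z + h)%C).
{ change (Cmod (minus (z + h)%C z) < del). rewrite Hm. exact Hh. }
specialize (Hdel Hb). simpl in Hdel.
unfold minus, plus, opp, scal, norm, mult in Hdel; simpl in Hdel.
replace (z + h + - z)%C with h in Hdel by ring.
replace (f (z + h) - f z - h * l)%C with (f (z + h) + - f z + - (h * l))%C by ring.
exact Hdel.
Qed.

Lemma is_derive_C_of_little_o (f : C -> C) z l :
  (forall eps, 0 < eps -> exists del, 0 < del /\
    forall h, Cmod h < del -> Cmod (f (z + h) - f z - h * l)%C <= eps * Cmod h) ->
  is_derive_C f z l.
Proof.
intros H. unfold is_derive, filterdiff. split.
- apply is_linear_scal_l.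
- intros x Hx.
  pose proof (@is_filter_lim_locally_unique C_AbsRing (AbsRing_NormedModule C_AbsRing) z x Hx)
    as E. subst x.
  intros eps. destruct (H eps (cond_pos eps)) as [d [Hd Hdd]].
  exists (mkposreal d Hd). intros y Hy. change (Cmod (minus y z) < d) in Hy.
  assert (Hm : minus y z = (y - z)%C) by reflexivity.
  rewrite Hm in Hy. specialize (Hdd (y - z)%C Hy).
  assert (Ey : (z + (y - z))%C = y) by ring. rewrite Ey in Hdd.
  change (Cmod (minus (minus (f y) (f z)) (scal (minus y z) l)) <= eps * Cmod (minus y z)).
  rewrite Hm. exact Hdd.
Qed.

Lemma is_derive_C_continuous (u : C -> C) l z : is_derive_C u z l ->
  forall eps, 0 < eps -> exists del, 0 < del /\
    forall w, Cmod (w - z)%C < del -> Cmod (u w - u z)%C < eps.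
Proof.
intros Hu eps Heps. destruct (is_derive_C_little_o u z l Hu 1 Rlt_0_1) as [d0 [Hd0 Hdd0]].
set (M := Cmod l + 1). assert (HM : 0 < M) by (unfold M; pose proof (Cmod_ge_0 l); lra).
exists (Rmin d0 (eps / M)). split. { apply Rmin_pos; [lra|apply Rdiv_lt_0_compat; lra]. }
intros w Hw. set (h := (w - z)%C) in *.
assert (Hh1 : Cmod h < d0) by (eapply Rlt_le_trans; [exact Hw|apply Rmin_l]).
assert (Hh2 : Cmod h < eps / M) by (eapply Rlt_le_trans; [exact Hw|apply Rmin_r]).
specialize (Hdd0 h Hh1). replace (z + h)%C with w in Hdd0 by (unfold h; ring).
replace (u w - u z)%C with ((u w - u z - h * l) + h * l)%C by ring.
eapply Rle_lt_trans; [apply Cmod_triangle|]. rewrite Cmod_mult.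
apply (Rle_lt_trans _ (Cmod h * M)). { unfold M. pose proof (Cmod_ge_0 h). nra. }
apply (Rmult_lt_compat_r M) in Hh2; [|lra].
replace (eps / M * M) with eps in Hh2 by (field; lra). lra.
Qed.

Definition continuous_at_C (F : C -> R) (z : C) : Prop :=
  forall eps, 0 < eps -> exists del, 0 < del /\
    forall w, Cmod (w - z)%C < del -> Rabs (F w - F z) < eps.

Lemma continuous_at_C_ext F1 F2 z :
  (forall w, F1 w = F2 w) -> continuous_at_C F1 z -> continuous_at_C F2 z.
Proof.
intros He H eps Heps. destruct (H eps Heps) as [d [Hd Hdd]]. exists d; split; auto.
intros w Hw. rewrite <- !He. auto.
Qed.

Lemma continuous_at_C_Cmod z : continuous_at_C Cmod z.
Proof.
intros eps Heps. exists eps. split; auto. intros w Hw.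
eapply Rle_lt_trans; [apply Cmod_reverse_triangle|exact Hw].
Qed.

Lemma continuous_at_C_lipschitz_comp (phi : C -> R) (u : C -> C) l z :
  (forall a b, Rabs (phi a - phi b) <= Cmod (a - b)%C) ->
  is_derive_C u z l -> continuous_at_C (fun w => phi (u w)) z.
Proof.
intros Hphi Hu eps Heps. destruct (is_derive_C_continuous u l z Hu eps Heps) as [d [Hd Hdd]].
exists d; split; auto. intros w Hw.
eapply Rle_lt_trans; [apply Hphi|apply (Hdd w Hw)].
Qed.

Lemma continuous_at_C_norm (u : C -> C) l z : is_derive_C u z l ->
  continuous_at_C (fun w => Cmod (u w)) z.
Proof. apply continuous_at_C_lipschitz_comp, Cmod_reverse_triangle. Qed.

Lemma continuous_at_C_Re (u : C -> C) l z : is_derive_C u z l ->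
  continuous_at_C (fun w => Re (u w)) z.
Proof.
apply continuous_at_C_lipschitz_comp. intros a b.
replace (Re a - Re b) with (Re (a - b)%C) by (unfold Re; simpl; ring). apply re_le_Cmod.
Qed.

Lemma continuous_at_C_Im (u : C -> C) l z : is_derive_C u z l ->
  continuous_at_C (fun w => Im (u w)) z.
Proof.
apply continuous_at_C_lipschitz_comp. intros a b.
replace (Im a - Im b) with (Im (a - b)%C) by (unfold Im; simpl; ring). apply Cmod_Im_le.
Qed.

Lemma continuous_at_C_comp (phi : R -> R) F z :
  continuity_pt phi (F z) -> continuous_at_C F z -> continuous_at_C (fun w => phi (F w)) z.
Proof.
intros Hp HF eps Heps. destruct (Hp eps Heps) as [a [Ha Haa]].
destruct (HF a Ha) as [d [Hd Hdd]]. exists d. split; auto. intros w Hw.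
destruct (Req_dec (F w) (F z)) as [E|E].
- rewrite E, Rminus_diag, Rabs_R0. lra.
- apply (Haa (F w)). split. split; [exact I|auto]. apply Hdd, Hw.
Qed.

Lemma continuous_at_C_mult F1 F2 z : continuous_at_C F1 z -> continuous_at_C F2 z ->
  continuous_at_C (fun w => F1 w * F2 w) z.
Proof.
intros H1 H2 eps Heps.
set (A := Rabs (F1 z) + 1). set (B := Rabs (F2 z) + 1).
assert (HA : 0 < A) by (unfold A; pose proof (Rabs_pos (F1 z)); lra).
assert (HB : 0 < B) by (unfold B; pose proof (Rabs_pos (F2 z)); lra).
set (e1 := Rmin 1 (eps / (2 * B))). set (e2 := eps / (2 * A)).
assert (He1 : 0 < e1) by (unfold e1; apply Rmin_pos; [lra|apply Rdiv_lt_0_compat; lra]).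
assert (He2 : 0 < e2) by (unfold e2; apply Rdiv_lt_0_compat; lra).
destruct (H1 e1 He1) as [d1 [Hd1 Hdd1]].
destruct (H2 (Rmin 1 e2) (Rmin_pos _ _ Rlt_0_1 He2)) as [d2 [Hd2 Hdd2]].
exists (Rmin d1 d2). split; [apply Rmin_pos; lra|]. intros w Hw.
assert (W1 : Rabs (F1 w - F1 z) < e1)
  by (apply Hdd1; eapply Rlt_le_trans; [exact Hw|apply Rmin_l]).
assert (W2 : Rabs (F2 w - F2 z) < Rmin 1 e2)
  by (apply Hdd2; eapply Rlt_le_trans; [exact Hw|apply Rmin_r]).
assert (W2b : Rabs (F2 w) <= B).
{ unfold B. pose proof (Rmin_l 1 e2). pose proof (Rabs_triang (F2 w - F2 z) (F2 z)) as T.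
  replace (F2 w - F2 z + F2 z) with (F2 w) in T by ring. lra. }
replace (F1 w * F2 w - F1 z * F2 z) with ((F1 w - F1 z) * F2 w + F1 z * (F2 w - F2 z))
  by ring.
eapply Rle_lt_trans; [apply Rabs_triang|]. rewrite !Rabs_mult.
assert (e1 * B <= eps / 2).
{ unfold e1. apply (Rle_trans _ (eps / (2 * B) * B)).
  - apply Rmult_le_compat_r; [lra|apply Rmin_r].
  - right; field; lra. }
assert (A * e2 = eps / 2) by (unfold e2; field; lra).
pose proof (Rmin_r 1 e2).
pose proof (Rabs_pos (F1 w - F1 z)). pose proof (Rabs_pos (F2 w)).
pose proof (Rabs_pos (F1 z)). pose proof (Rabs_pos (F2 w - F2 z)).
assert (Rabs (F1 w - F1 z) * Rabs (F2 w) <= e1 * B) by (apply Rmult_le_compat; lra).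
assert (Rabs (F1 z) * Rabs (F2 w - F2 z) < A * e2).
{ apply (Rle_lt_trans _ (Rabs (F1 z) * e2)).
  - apply Rmult_le_compat_l; lra.
  - apply Rmult_lt_compat_r; [lra|unfold A; lra]. }
lra.
Qed.

(** * Differentiation along real paths and polar coordinates *)

Definition path_deriv (a : R -> C) t (d : C) : Prop :=
  is_derive (fun s => Re (a s)) t (Re d) /\ is_derive (fun s => Im (a s)) t (Im d).

Lemma path_deriv_little_o (a : R -> C) t v : path_deriv a t v ->
  forall eps, 0 < eps -> exists del, 0 < del /\
    forall h, Rabs h < del -> Cmod (a (t + h)%R - a t - RtoC h * v)%C <= eps * Rabs h.
Proof.
intros [Hx Hy] eps Heps.
apply is_derive_Reals in Hx. apply is_derive_Reals in Hy.
destruct (little_o_of_derivable_pt_lim _ _ _ Hx (eps/2)) as [d1 [Hd1 H1]]; [lra|].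
destruct (little_o_of_derivable_pt_lim _ _ _ Hy (eps/2)) as [d2 [Hd2 H2]]; [lra|].
exists (Rmin d1 d2). split; [apply Rmin_pos; lra|]. intros h Hh.
specialize (H1 h (Rlt_le_trans _ _ _ Hh (Rmin_l _ _))).
specialize (H2 h (Rlt_le_trans _ _ _ Hh (Rmin_r _ _))).
eapply Rle_trans; [apply Cmod_le_Re_Im|].
replace (Re (a (t + h)%R - a t - RtoC h * v)%C) with (Re (a (t + h)%R) - Re (a t) - h * Re v)
  by (unfold Re; simpl; ring).
replace (Im (a (t + h)%R - a t - RtoC h * v)%C) with (Im (a (t + h)%R) - Im (a t) - h * Im v)
  by (unfold Im; simpl; ring).
lra.
Qed.

Lemma path_deriv_of_little_o (a : R -> C) t v :
  (forall eps, 0 < eps -> exists del, 0 < del /\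
    forall h, Rabs h < del -> Cmod (a (t + h)%R - a t - RtoC h * v)%C <= eps * Rabs h) ->
  path_deriv a t v.
Proof.
intros H. split; apply is_derive_Reals; apply derivable_pt_lim_of_little_o;
  intros eps Heps; destruct (H eps Heps) as [del [Hd Hdel]];
  exists del; (split; [exact Hd|]); intros h Hh; specialize (Hdel h Hh).
- eapply Rle_trans; [|exact Hdel]. eapply Rle_trans; [|apply re_le_Cmod]. right. f_equal. unfold Re; simpl. ring.
- eapply Rle_trans; [|exact Hdel]. eapply Rle_trans; [|apply Cmod_Im_le]. right. f_equal. unfold Im; simpl. ring.
Qed.

Lemma increment_bound (k v : C) h e : e <= 1/2 ->
  Cmod (k - RtoC h * v)%C <= 2 * e * Rabs h -> Cmod k <= (Cmod v + 1) * Rabs h.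
Proof.
intros He Hk. replace k with ((k - RtoC h * v) + RtoC h * v)%C by ring.
eapply Rle_trans; [apply Cmod_triangle|]. rewrite Cmod_mult, Cmod_R.
pose proof (Rabs_pos h). nra.
Qed.

Lemma chain_rule_estimate (F k v l : C) h e : 0 <= e <= 1/2 ->
  Cmod (k - RtoC h * v)%C <= 2 * e * Rabs h -> Cmod (F - k * l)%C <= e * Cmod k ->
  Cmod (F - RtoC h * (v * l))%C <= 2 * e * (Cmod v + 1 + Cmod l) * Rabs h.
Proof.
intros He Hk HF. pose proof (increment_bound k v h e (proj2 He) Hk) as Hkb.
replace (F - RtoC h * (v * l))%C with ((F - k * l) + (k - RtoC h * v) * l)%C by ring.
eapply Rle_trans; [apply Cmod_triangle|]. rewrite Cmod_mult.
pose proof (Cmod_ge_0 l). pose proof (Rabs_pos h). pose proof (Cmod_ge_0 v).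
assert (e * Cmod k <= e * ((Cmod v + 1) * Rabs h)) by (apply Rmult_le_compat_l; lra).
assert (Cmod (k - RtoC h * v)%C * Cmod l <= 2 * e * Rabs h * Cmod l)
  by (apply Rmult_le_compat_r; lra).
assert (0 <= e * ((Cmod v + 1) * Rabs h)) by (apply Rmult_le_pos; [lra|apply Rmult_le_pos; lra]).
nra.
Qed.

Lemma path_deriv_comp (f : C -> C) l (a : R -> C) t v :
  is_derive_C f (a t) l -> path_deriv a t v -> path_deriv (fun s => f (a s)) t (v * l)%C.
Proof.
intros Hf Ha. apply path_deriv_of_little_o. intros eps Heps.
set (M := Cmod v + 1 + Cmod l).
assert (HM : 0 < M) by (unfold M; pose proof (Cmod_ge_0 v); pose proof (Cmod_ge_0 l); lra).
set (e := Rmin (eps / (2 * M)) (1/2)).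
assert (He : 0 < e) by (apply Rmin_pos; [apply Rdiv_lt_0_compat|]; lra).
assert (He1 : e <= 1/2) by apply Rmin_r.
assert (HeM : 2 * e * M <= eps).
{ apply (Rle_trans _ (2 * (eps / (2 * M)) * M)).
  - apply Rmult_le_compat_r; [lra|]. apply Rmult_le_compat_l; [lra|apply Rmin_l].
  - right. field. lra. }
destruct (path_deriv_little_o a t v Ha (2 * e)) as [d1 [Hd1 H1]]; [lra|].
destruct (is_derive_C_little_o f (a t) l Hf e He) as [d3 [Hd3 H3]].
exists (Rmin d1 (d3 / M)). split; [apply Rmin_pos; [|apply Rdiv_lt_0_compat]; lra|].
intros h Hh.
assert (Hh1 : Rabs h < d1) by (eapply Rlt_le_trans; [exact Hh|apply Rmin_l]).
assert (Hh3 : M * Rabs h < d3).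
{ assert (Hhd : Rabs h < d3 / M) by (eapply Rlt_le_trans; [exact Hh|apply Rmin_r]).
  apply (Rmult_lt_compat_l M) in Hhd; [|lra]. replace (M * (d3 / M)) with d3 in Hhd by (field; lra).
  exact Hhd. }
set (k := (a (t + h)%R - a t)%C).
assert (Hk : Cmod (k - RtoC h * v)%C <= 2 * e * Rabs h) by exact (H1 h Hh1).
assert (Hk3 : Cmod k < d3).
{ pose proof (increment_bound k v h e He1 Hk). pose proof (Rabs_pos h).
  assert ((Cmod v + 1) * Rabs h <= M * Rabs h)
    by (apply Rmult_le_compat_r; [lra|unfold M; pose proof (Cmod_ge_0 l); lra]).
  lra. }
specialize (H3 k Hk3). replace (a t + k)%C with (a (t + h)%R) in H3 by (unfold k; ring).
eapply Rle_trans; [apply (chain_rule_estimate _ k v l h e); [lra|exact Hk|exact H3]|].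
apply Rmult_le_compat_r; [apply Rabs_pos|exact HeM].
Qed.

Lemma path_deriv_mult (a b : R -> C) t da db : path_deriv a t da -> path_deriv b t db ->
  path_deriv (fun s => a s * b s)%C t (da * b t + a t * db)%C.
Proof.
intros [Ha1 Ha2] [Hb1 Hb2]. split.
- change (is_derive (fun s => Re (a s) * Re (b s) - Im (a s) * Im (b s)) t
            (Re (da * b t + a t * db)%C)).
  replace (Re (da * b t + a t * db)%C) with
    ((Re da * Re (b t) + Re (a t) * Re db) - (Im da * Im (b t) + Im (a t) * Im db))
    by (unfold Re, Im; simpl; ring).
  apply (is_derive_minus (fun s => Re (a s) * Re (b s)) (fun s => Im (a s) * Im (b s))).
  + apply (is_derive_mult (fun s => Re (a s)) (fun s => Re (b s))); auto using Rmult_comm.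
  + apply (is_derive_mult (fun s => Im (a s)) (fun s => Im (b s))); auto using Rmult_comm.
- change (is_derive (fun s => Re (a s) * Im (b s) + Im (a s) * Re (b s)) t
            (Im (da * b t + a t * db)%C)).
  replace (Im (da * b t + a t * db)%C) with
    ((Re da * Im (b t) + Re (a t) * Im db) + (Im da * Re (b t) + Im (a t) * Re db))
    by (unfold Re, Im; simpl; ring).
  apply (is_derive_plus (fun s => Re (a s) * Im (b s)) (fun s => Im (a s) * Re (b s))).
  + apply (is_derive_mult (fun s => Re (a s)) (fun s => Im (b s))); auto using Rmult_comm.
  + apply (is_derive_mult (fun s => Im (a s)) (fun s => Re (b s))); auto using Rmult_comm.
Qed.

Lemma path_deriv_scal (c : C) (a : R -> C) t da : path_deriv a t da ->
  path_deriv (fun s => c * a s)%C t (c * da)%C.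
Proof.
intros H.
assert (Hc : path_deriv (fun _ => c) t 0%C) by (split; exact (is_derive_const _ _)).
pose proof (path_deriv_mult _ a t _ da Hc H) as H2.
replace (c * da)%C with (0 * a t + c * da)%C by ring. exact H2.
Qed.

Lemma is_derive_dot (a b : R -> C) t da db : path_deriv a t da -> path_deriv b t db ->
  is_derive (fun s => dot (a s) (b s)) t (dot da (b t) + dot (a t) db).
Proof.
intros [Ha1 Ha2] [Hb1 Hb2]. unfold dot.
replace (Re da * Re (b t) + Im da * Im (b t) + (Re (a t) * Re db + Im (a t) * Im db))
  with ((Re da * Re (b t) + Re (a t) * Re db) + (Im da * Im (b t) + Im (a t) * Im db))
  by ring.
apply (is_derive_plus (fun s => Re (a s) * Re (b s)) (fun s => Im (a s) * Im (b s))).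
- apply (is_derive_mult (fun s => Re (a s)) (fun s => Re (b s))); auto using Rmult_comm.
- apply (is_derive_mult (fun s => Im (a s)) (fun s => Im (b s))); auto using Rmult_comm.
Qed.

Lemma is_derive_dot_self (a : R -> C) t da : path_deriv a t da ->
  is_derive (fun s => dot (a s) (a s)) t (2 * dot (a t) da).
Proof.
intros H. pose proof (is_derive_dot a a t da da H H) as H2.
rewrite (dot_sym da) in H2. replace (2 * dot (a t) da) with (dot (a t) da + dot (a t) da)
  by ring. exact H2.
Qed.

Definition pol (r t : R) : C := (r * cos t, r * sin t).

Lemma pol_scal r t : pol r t = (RtoC r * pol 1 t)%C.
Proof. unfold pol. apply injective_projections; simpl; ring. Qed.

Lemma pol_zero t : pol 0 t = RtoC 0.
Proof. unfold pol. apply injective_projections; simpl; ring. Qed.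

Lemma Cmod_pol r t : Cmod (pol r t) = Rabs r.
Proof.
unfold Cmod, pol; simpl. rewrite <- sqrt_Rsqr_abs. f_equal.
pose proof (sin2_cos2 t). unfold Rsqr in *. nra.
Qed.

Lemma pol_in_disk r t : 0 <= r < 1 -> Cmod (pol r t) < 1.
Proof. intros. rewrite Cmod_pol, Rabs_pos_eq; lra. Qed.

Lemma path_deriv_pol_angle r t : path_deriv (fun s => pol r s) t (Ci * pol r t)%C.
Proof.
split; unfold pol, Re, Im; simpl.
- replace (0 * (r * cos t) - 1 * (r * sin t)) with (r * (- sin t)) by ring.
  apply is_derive_scal. apply is_derive_Reals. apply derivable_pt_lim_cos.
- replace (0 * (r * sin t) + 1 * (r * cos t)) with (r * cos t) by ring.
  apply is_derive_scal. apply is_derive_Reals. apply derivable_pt_lim_sin.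
Qed.

Lemma path_deriv_pol_radius r t : path_deriv (fun s => pol s t) r (pol 1 t).
Proof.
split; unfold pol, Re, Im; simpl.
- apply (is_derive_scal_l (fun s => s) r 1 (cos t)). apply is_derive_Reals, derivable_pt_lim_id.
- apply (is_derive_scal_l (fun s => s) r 1 (sin t)). apply is_derive_Reals, derivable_pt_lim_id.
Qed.

Lemma polar_representation (w : C) : 0 < Cmod w ->
  exists t, 0 <= t <= 2 * PI /\ w = pol (Cmod w) t.
Proof.
intros Hw. set (r := Cmod w) in *. destruct w as [x y].
assert (Hr2 : r * r = x * x + y * y).
{ unfold r, Cmod; simpl. rewrite sqrt_sqrt; [ring|nra]. }
assert (Hb : -1 <= x / r <= 1).
{ assert (Hxr : -r <= x <= r) by (split; nra).
  split; apply (Rmult_le_reg_r r); try lra;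
    unfold Rdiv; rewrite Rmult_assoc, Rinv_l by lra; lra. }
assert (Hs : sqrt (1 - (x / r)²) = Rabs y / r).
{ assert (E : 1 - (x / r)² = (y / r)²).
  { replace 1 with ((x * x + y * y) / (r * r)) by (rewrite <- Hr2; field; lra).
    unfold Rsqr; field; lra. }
  rewrite E, sqrt_Rsqr_abs. unfold Rdiv.
  rewrite Rabs_mult, Rabs_inv, (Rabs_pos_eq r) by lra. reflexivity. }
pose proof (acos_bound (x / r)) as Hab.
destruct (Rle_lt_dec 0 y) as [Hy|Hy].
- exists (acos (x / r)). split; [pose proof PI_RGT_0; lra|].
  unfold pol. rewrite cos_acos, sin_acos by exact Hb. rewrite Hs, Rabs_pos_eq by lra.
  f_equal; field; lra.
- exists (2 * PI - acos (x / r)). split; [pose proof PI_RGT_0; lra|].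
  unfold pol. replace (2 * PI - acos (x / r)) with (- acos (x / r) + 2 * PI) by ring.
  rewrite cos_plus, sin_plus, cos_2PI, sin_2PI, cos_neg, sin_neg.
  rewrite cos_acos, sin_acos by exact Hb. rewrite Hs, Rabs_left by lra.
  f_equal; field; lra.
Qed.

Lemma pol_lipschitz r r' t t' : Rabs r <= 1 ->
  Cmod (pol r' t' - pol r t)%C <= 2 * Rabs (r' - r) + 2 * Rabs (t' - t).
Proof.
intros Hr. eapply Rle_trans; [apply Cmod_le_Re_Im|]. unfold pol, Re, Im; simpl.
replace (r' * cos t' + - (r * cos t)) with ((r' - r) * cos t' + r * (cos t' - cos t)) by ring.
replace (r' * sin t' + - (r * sin t)) with ((r' - r) * sin t' + r * (sin t' - sin t)) by ring.
pose proof (cos_lipschitz t' t). pose proof (sin_lipschitz t' t).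
pose proof (COS_bound t'). pose proof (SIN_bound t').
assert (Rabs (cos t') <= 1) by (apply Rabs_le; lra).
assert (Rabs (sin t') <= 1) by (apply Rabs_le; lra).
pose proof (Rabs_pos (r' - r)). pose proof (Rabs_pos (t' - t)). pose proof (Rabs_pos r).
pose proof (Rabs_triang ((r' - r) * cos t') (r * (cos t' - cos t))).
pose proof (Rabs_triang ((r' - r) * sin t') (r * (sin t' - sin t))).
rewrite !Rabs_mult in *.
pose proof (Rabs_pos (cos t' - cos t)). pose proof (Rabs_pos (sin t' - sin t)).
pose proof (Rabs_pos (cos t')). pose proof (Rabs_pos (sin t')).
nra.
Qed.

(* Clamping x into [0, r]; it lets a function continuous on the closed
   disk of radius r be read as a jointly continuous function on R². *)
Definition clamp (r x : R) : R := Rmax 0 (Rmin x r).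

Lemma clamp_lipschitz r x y : 0 <= r -> Rabs (clamp r x - clamp r y) <= Rabs (x - y).
Proof.
intros. unfold clamp, Rmax, Rmin.
repeat destruct Rle_dec; apply Rabs_le; unfold Rabs; destruct Rcase_abs; lra.
Qed.

Lemma clamp_bound r x : 0 <= r -> 0 <= clamp r x <= r.
Proof. intros. unfold clamp, Rmax, Rmin. repeat destruct Rle_dec; lra. Qed.

Lemma clamp_id r x : 0 <= x <= r -> clamp r x = x.
Proof. intros. unfold clamp, Rmax, Rmin. repeat destruct Rle_dec; lra. Qed.

Lemma polar_jointly_continuous (F : C -> R) r : 0 <= r <= 1 ->
  (forall z, Cmod z <= r -> continuous_at_C F z) ->
  jointly_continuous (fun x y => F (pol (clamp r x) y)).
Proof.
intros Hr HF x y eps Heps.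
pose proof (clamp_bound r x (proj1 Hr)) as Hcl.
assert (Hz : Cmod (pol (clamp r x) y) <= r) by (rewrite Cmod_pol, Rabs_pos_eq; lra).
destruct (HF _ Hz eps Heps) as [d [Hd Hdd]].
exists (d / 4). split; [lra|]. intros x' y' Hx Hy. apply Hdd.
eapply Rle_lt_trans; [apply pol_lipschitz; rewrite Rabs_pos_eq; lra|].
pose proof (clamp_lipschitz r x' x (proj1 Hr)). lra.
Qed.

(** * The exponential and the principal logarithm *)

Lemma cexp_pair a b : cexp (a, b) = (exp a * cos b, exp a * sin b).
Proof. unfold cexp, Re, Im; simpl. apply injective_projections; simpl; ring. Qed.

Lemma cexp_plus x y : cexp (x + y)%C = (cexp x * cexp y)%C.
Proof.
destruct x as [a b]; destruct y as [c d]. unfold Cplus. simpl. rewrite !cexp_pair.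
rewrite exp_plus, cos_plus, sin_plus. apply injective_projections; simpl; ring.
Qed.

Lemma Cmod_cexp x : Cmod (cexp x) = exp (Re x).
Proof.
destruct x as [a b]. rewrite cexp_pair. unfold Cmod; simpl.
replace (exp a * cos b * (exp a * cos b * 1) + exp a * sin b * (exp a * sin b * 1))
  with (exp a * exp a * (Rsqr (sin b) + Rsqr (cos b))) by (unfold Rsqr; ring).
rewrite sin2_cos2, Rmult_1_r. apply sqrt_square. pose proof (exp_pos a); lra.
Qed.

Lemma cexp_first_order_estimate a b e : 0 <= e <= 1/2 -> Cmod (a, b) <= e / 2 ->
  Rabs (exp a - 1 - a) <= e * Rabs a -> Rabs (cos b - 1) <= e * Rabs b ->
  Rabs (sin b - b) <= e * Rabs b ->
  Cmod (cexp (a, b) - RtoC 1 - (a, b))%C <= 5 * e * Cmod (a, b).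
Proof.
intros He Hm Hexp Hcos Hsin.
pose proof (re_le_Cmod (a, b)) as Ha. pose proof (Cmod_Im_le (a, b)) as Hb.
set (m := Cmod (a, b)) in *. simpl in Ha, Hb.
pose proof (Rabs_pos a). pose proof (Rabs_pos b). pose proof (exp_pos a).
assert (Hsb : Rabs (sin b) <= Rabs b)
  by (pose proof (sin_lipschitz b 0) as Hs; rewrite sin_0, !Rminus_0_r in Hs; exact Hs).
assert (He1 : Rabs (exp a - 1) <= 2 * Rabs a).
{ replace (exp a - 1) with ((exp a - 1 - a) + a) by ring.
  eapply Rle_trans; [apply Rabs_triang|]. nra. }
assert (Hea : exp a <= 2) by (pose proof (Rle_abs (exp a - 1)); lra).
eapply Rle_trans; [apply Cmod_le_Re_Im|].
rewrite cexp_pair. unfold Re, Im; simpl.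
replace (exp a * cos b + - (1) + - a) with ((exp a - 1 - a) + exp a * (cos b - 1)) by ring.
replace (exp a * sin b + - 0 + - b) with ((exp a - 1) * sin b + (sin b - b)) by ring.
pose proof (Rabs_triang (exp a - 1 - a) (exp a * (cos b - 1))).
pose proof (Rabs_triang ((exp a - 1) * sin b) (sin b - b)).
rewrite Rabs_mult in *. rewrite (Rabs_pos_eq (exp a)) in * by lra.
pose proof (Rabs_pos (cos b - 1)). pose proof (Rabs_pos (sin b)). pose proof (Rabs_pos (exp a - 1)).
assert (Rabs (exp a - 1) * Rabs (sin b) <= e * m).
{ assert (Rabs a * Rabs b <= m * m) by (apply Rmult_le_compat; lra).
  assert (m * m <= e / 2 * m) by (apply Rmult_le_compat_r; lra).
  apply (Rle_trans _ (2 * Rabs a * Rabs b)); [apply Rmult_le_compat; lra|lra]. }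
assert (exp a * Rabs (cos b - 1) <= 2 * (e * m)) by (apply Rmult_le_compat; nra).
assert (e * Rabs a <= e * m) by (apply Rmult_le_compat_l; lra).
assert (e * Rabs b <= e * m) by (apply Rmult_le_compat_l; lra).
lra.
Qed.

Lemma cexp_little_o_at_0 eta : 0 < eta -> exists del, 0 < del /\
  forall k, Cmod k < del -> Cmod (cexp k - RtoC 1 - k)%C <= eta * Cmod k.
Proof.
intros Heta. set (e := Rmin (eta / 5) (1/2)).
assert (He : 0 < e) by (unfold e; apply Rmin_pos; lra).
assert (He5 : 5 * e <= eta) by (unfold e; pose proof (Rmin_l (eta / 5) (1/2)); lra).
assert (He2 : e <= 1/2) by (unfold e; apply Rmin_r).
pose proof (derivable_pt_lim_exp 0) as Hexp. rewrite exp_0 in Hexp.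
pose proof (derivable_pt_lim_cos 0) as Hcos. rewrite sin_0 in Hcos.
pose proof (derivable_pt_lim_sin 0) as Hsin. rewrite cos_0 in Hsin.
destruct (little_o_of_derivable_pt_lim _ _ _ Hexp e He) as [d1 [Hd1 H1]].
destruct (little_o_of_derivable_pt_lim _ _ _ Hcos e He) as [d2 [Hd2 H2]].
destruct (little_o_of_derivable_pt_lim _ _ _ Hsin e He) as [d3 [Hd3 H3]].
exists (Rmin (Rmin d1 d2) (Rmin d3 (e / 2))). split; [repeat apply Rmin_pos; lra|].
intros [a b] Hk.
pose proof (re_le_Cmod (a, b)) as Ha. pose proof (Cmod_Im_le (a, b)) as Hb.
simpl in Ha, Hb.
pose proof (Rmin_l (Rmin d1 d2) (Rmin d3 (e / 2))). pose proof (Rmin_r (Rmin d1 d2) (Rmin d3 (e / 2))).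
pose proof (Rmin_l d1 d2). pose proof (Rmin_r d1 d2). pose proof (Rmin_l d3 (e / 2)).
pose proof (Rmin_r d3 (e / 2)).
specialize (H1 a ltac:(lra)). specialize (H2 b ltac:(lra)). specialize (H3 b ltac:(lra)).
rewrite Rplus_0_l, exp_0 in H1. rewrite Rplus_0_l, cos_0 in H2. rewrite Rplus_0_l, sin_0 in H3.
eapply Rle_trans; [apply (cexp_first_order_estimate a b e)|].
- lra.
- lra.
- replace (exp a - 1 - a) with (exp a - 1 - a * 1) by ring. exact H1.
- replace (cos b - 1) with (cos b - 1 - b * - 0) by ring. exact H2.
- replace (sin b - b) with (sin b - 0 - b * 1) by ring. exact H3.
- apply Rmult_le_compat_r; [apply Cmod_ge_0|lra].
Qed.

(* The principal logarithm on the right half-plane. *)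
Definition clog (v : C) : C := (ln (dot v v) / 2, atan (Im v / Re v)).

Lemma cexp_clog v : 0 < Re v -> cexp (clog v) = v.
Proof.
intros Hx. destruct v as [x y]. unfold clog. rewrite cexp_pair.
unfold Re, Im, dot in *; simpl in *.
set (s := x * x + y * y).
assert (Hs : 0 < s) by (unfold s; nra).
set (E := exp (ln s / 2)).
assert (HE : 0 < E) by apply exp_pos.
assert (HEE : E * E = s).
{ unfold E. rewrite <- exp_plus. replace (ln s / 2 + ln s / 2) with (ln s) by field.
  apply exp_ln; exact Hs. }
rewrite cos_atan, sin_atan.
assert (Hq : sqrt (1 + (y / x)²) = E / x).
{ replace (1 + (y / x)²) with (Rsqr (E / x)).
  { apply sqrt_Rsqr. apply Rlt_le, Rdiv_lt_0_compat; lra. }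
  unfold Rsqr. replace (E / x * (E / x)) with (E * E / (x * x)) by (field; lra).
  rewrite HEE. unfold s. field. lra. }
rewrite Hq. apply injective_projections; simpl; field; lra.
Qed.

Lemma clog_1 : clog (RtoC 1) = RtoC 0.
Proof.
unfold clog, dot, Re, Im, RtoC; simpl. replace (1 * 1 + 0 * 0) with 1 by ring. rewrite ln_1.
replace (0 / 1) with 0 by field. rewrite atan_0. apply injective_projections; simpl; field.
Qed.

Lemma small_disk_about_1 x y : (x - 1)^2 + y^2 < 1/5 ->
  11/20 < x /\ y * y < x * x / 4 /\ 3025/10000 <= x * x + y * y <= 21/10.
Proof.
intros Hxy. assert (Hy2 : 0 <= y^2) by nra.
assert (Hx : 11/20 < x).
{ destruct (Rle_lt_dec x (11/20)) as [Hl|Hl]; auto. exfalso.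
  assert (9/20 <= 1 - x) by lra. assert ((x - 1)^2 >= (9/20)^2) by nra. lra. }
assert (Hy : y * y < x * x / 4).
{ assert (0 <= (x - 4/5)^2) by apply pow2_ge_0. nra. }
repeat split; nra.
Qed.

Lemma Cmod_clog_lt_1 v : (Re v - 1)^2 + (Im v)^2 < 1/5 -> Cmod (clog v) < 1.
Proof.
intros H. destruct v as [x y]. unfold Re, Im in H; simpl in H.
destruct (small_disk_about_1 x y H) as [Hx [Hy [Hs1 Hs2]]].
unfold clog, dot, Re, Im; simpl.
set (s := x * x + y * y) in *.
pose proof exp_17_10_lower_bound as E17.
assert (Hl1 : - (17/10) <= ln s).
{ destruct (Rle_lt_dec (-(17/10)) (ln s)) as [|Hl]; auto. exfalso.
  apply exp_increasing in Hl. rewrite exp_ln in Hl by lra.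
  assert (exp (-(17/10)) * exp (17/10) = 1).
  { rewrite <- exp_plus. replace (-(17/10) + 17/10) with 0 by ring. apply exp_0. }
  nra. }
assert (Hl2 : ln s <= 17/10).
{ rewrite <- (ln_exp (17/10)). destruct (Req_dec s (exp (17/10))) as [E|E].
  - rewrite E; lra.
  - left. apply ln_increasing; lra. }
assert (Hyx : (y / x)^2 < 1/4).
{ replace ((y / x)^2) with (y * y / (x * x)) by (field; lra).
  apply (Rmult_lt_reg_r (x * x)); [nra|].
  unfold Rdiv. rewrite Rmult_assoc, Rinv_l by nra. lra. }
assert (Ha : (atan (y / x))^2 <= (y / x)^2).
{ rewrite <- !Rsqr_pow2. apply Rsqr_le_abs_1, Rabs_atan_le. }
unfold Cmod; simpl.
apply (Rlt_le_trans _ (sqrt 1)); [apply sqrt_lt_1_alt|rewrite sqrt_1; lra]. split.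
- apply Rplus_le_le_0_compat; rewrite Rmult_1_r; apply Rle_0_sqr.
- assert ((ln s / 2) * (ln s / 2) <= 7225/10000) by nra.
  simpl in Ha. lra.
Qed.

Lemma log_increment_estimate (P D k : C) e : P <> RtoC 0 -> e <= 1/2 ->
  Cmod (cexp k - RtoC 1 - k)%C <= e * Cmod k -> (P * cexp k = P + D)%C ->
  Cmod k <= 2 * (Cmod D / Cmod P) /\ Cmod (k - D / P)%C <= e * Cmod k.
Proof.
intros HP0 He Hk Hexp.
assert (EkD : (k - D / P)%C = (- (cexp k - RtoC 1 - k))%C).
{ replace D with (P * cexp k - P)%C by (rewrite Hexp; ring). field. exact HP0. }
assert (Hdiff : Cmod (k - D / P)%C <= e * Cmod k) by (rewrite EkD, Cmod_opp; exact Hk).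
split; [|exact Hdiff].
pose proof (Cmod_triangle (k - D / P)%C (D / P)%C) as T.
replace (k - D / P + D / P)%C with k in T by ring.
rewrite Cmod_div in T by exact HP0. pose proof (Cmod_ge_0 k).
assert (e * Cmod k <= Cmod k / 2) by nra. lra.
Qed.

Lemma log_quotient_estimate (P D k h l : C) e1 e2 : P <> RtoC 0 ->
  0 <= e1 <= 1/2 -> e2 <= 1 ->
  Cmod (cexp k - RtoC 1 - k)%C <= e1 * Cmod k -> (P * cexp k = P + D)%C ->
  Cmod (D - h * l)%C <= e2 * Cmod h ->
  Cmod (k - h * (l / P))%C <= (2 * e1 * (Cmod l + 1) + e2) * (Cmod h / Cmod P).
Proof.
intros HP0 He1 He2 Hk Hexp HDh.
destruct (log_increment_estimate P D k e1 HP0 (proj2 He1) Hk Hexp) as [Hkb Hkd].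
assert (HP : 0 < Cmod P) by (apply Cmod_gt_0; exact HP0).
pose proof (Cmod_ge_0 h). pose proof (Cmod_ge_0 D). pose proof (Cmod_ge_0 l).
assert (HDb : Cmod D <= (Cmod l + 1) * Cmod h).
{ replace D with ((D - h * l) + h * l)%C by ring. eapply Rle_trans; [apply Cmod_triangle|].
  rewrite Cmod_mult. nra. }
replace (k - h * (l / P))%C with ((k - D / P) + (D - h * l) / P)%C by (field; exact HP0).
eapply Rle_trans; [apply Cmod_triangle|]. rewrite Cmod_div by exact HP0.
set (X := Cmod h / Cmod P).
assert (HX0 : 0 <= X) by (unfold X; apply Rdiv_le_0_compat; lra).
assert (HDX : Cmod D / Cmod P <= (Cmod l + 1) * X).
{ unfold X, Rdiv. rewrite <- Rmult_assoc.
  apply Rmult_le_compat_r; [apply Rlt_le, Rinv_0_lt_compat; lra|lra]. }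
assert (HDhX : Cmod (D - h * l)%C / Cmod P <= e2 * X).
{ unfold X, Rdiv. rewrite <- Rmult_assoc.
  apply Rmult_le_compat_r; [apply Rlt_le, Rinv_0_lt_compat; lra|lra]. }
assert (e1 * Cmod k <= e1 * (2 * ((Cmod l + 1) * X))) by (apply Rmult_le_compat_l; lra).
lra.
Qed.

Lemma is_derive_C_log (p w : C -> C) z l R :
  0 < R -> (forall h, Cmod h < R -> cexp (w (z + h)%C) = p (z + h)%C) ->
  is_derive_C p z l -> p z <> RtoC 0 ->
  (forall eps, 0 < eps -> exists del, 0 < del /\
     forall h, Cmod h < del -> Cmod (w (z + h) - w z)%C < eps) ->
  is_derive_C w z (l / p z)%C.
Proof.
intros HR Hexp Hp HP0 Hw. apply is_derive_C_of_little_o. intros eta Heta.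
set (P := p z) in *.
assert (HP : 0 < Cmod P) by (apply Cmod_gt_0; exact HP0).
set (M := Cmod l + 1). assert (HM : 0 < M) by (unfold M; pose proof (Cmod_ge_0 l); lra).
set (e1 := Rmin (1/2) (eta * Cmod P / (4 * M))).
set (e2 := Rmin 1 (eta * Cmod P / 2)).
assert (He1 : 0 < e1) by (unfold e1; apply Rmin_pos; [lra|]; apply Rdiv_lt_0_compat; nra).
assert (He2 : 0 < e2) by (unfold e2; apply Rmin_pos; [lra|]; apply Rdiv_lt_0_compat; nra).
assert (Hsum : 2 * e1 * M + e2 <= eta * Cmod P).
{ assert (e1 * (4 * M) <= eta * Cmod P).
  { apply (Rle_trans _ (eta * Cmod P / (4 * M) * (4 * M))).
    - apply Rmult_le_compat_r; [lra|apply Rmin_r].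
    - right; field; lra. }
  assert (e2 <= eta * Cmod P / 2) by apply Rmin_r. nra. }
destruct (cexp_little_o_at_0 e1 He1) as [d1 [Hd1 Hdd1]].
destruct (is_derive_C_little_o p z l Hp e2 He2) as [d2 [Hd2 Hdd2]].
destruct (Hw d1 Hd1) as [d3 [Hd3 Hdd3]].
exists (Rmin R (Rmin d2 d3)). split; [repeat apply Rmin_pos; lra|].
intros h Hh.
pose proof (Rmin_l R (Rmin d2 d3)). pose proof (Rmin_r R (Rmin d2 d3)).
pose proof (Rmin_l d2 d3). pose proof (Rmin_r d2 d3).
set (k := (w (z + h) - w z)%C).
assert (HwP : cexp (w z) = P).
{ pose proof (Hexp (RtoC 0) ltac:(rewrite Cmod_0; lra)) as E. rewrite Cplus_0_r in E. exact E. }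
assert (Hpk : (P * cexp k = P + (p (z + h) - P))%C).
{ rewrite <- HwP at 1. rewrite <- cexp_plus.
  replace (w z + k)%C with (w (z + h)%C) by (unfold k; ring). rewrite (Hexp h) by lra. ring. }
eapply Rle_trans.
- apply (log_quotient_estimate P (p (z + h) - P)%C k h l e1 e2); auto.
  + split; [lra|apply Rmin_l].
  + apply Rmin_l.
  + exact (Hdd1 k (Hdd3 h ltac:(lra))).
  + exact (Hdd2 h ltac:(lra)).
- pose proof (Cmod_ge_0 h). fold M.
  replace (eta * Cmod h) with (eta * Cmod P * (Cmod h / Cmod P)) by (field; lra).
  apply Rmult_le_compat_r; [apply Rdiv_le_0_compat; lra|lra].
Qed.

Lemma clog_comp_continuous (p : C -> C) l z : is_derive_C p z l -> 0 < Re (p z) ->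
  forall eps, 0 < eps -> exists del, 0 < del /\
    forall h, Cmod h < del -> Cmod (clog (p (z + h)) - clog (p z))%C < eps.
Proof.
intros Hp Hre eps Heps.
assert (Hd : 0 < dot (p z) (p z)) by (unfold dot; nra).
assert (C1 : continuous_at_C (fun w => ln (dot (p w) (p w)) / 2) z).
{ apply (continuous_at_C_ext (fun w => (fun t => ln t / 2) ((fun t => t^2) (Cmod (p w))))).
  { intros w. rewrite dot_Cmod. reflexivity. }
  apply (continuous_at_C_comp (fun t => ln t / 2)).
  - rewrite <- dot_Cmod. apply derivable_continuous_pt. exists (/ dot (p z) (p z) / 2).
    apply is_derive_Reals. auto_derive; [lra|field; lra].
  - apply (continuous_at_C_comp (fun t => t^2)).
    + apply derivable_continuous_pt. exists (2 * Cmod (p z) ^ 1). apply derivable_pt_lim_pow.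
    + exact (continuous_at_C_norm p l z Hp). }
assert (C2 : continuous_at_C (fun w => atan (Im (p w) / Re (p w))) z).
{ apply (continuous_at_C_comp atan (fun w => Im (p w) / Re (p w))).
  - apply derivable_continuous_pt. eexists. apply derivable_pt_lim_atan.
  - apply (continuous_at_C_mult (fun w => Im (p w)) (fun w => / Re (p w))).
    + exact (continuous_at_C_Im p l z Hp).
    + apply (continuous_at_C_comp (fun t => / t) (fun w => Re (p w))).
      * apply derivable_continuous_pt. exists (- / (Re (p z))^2).
        apply is_derive_Reals. auto_derive; [lra|field; lra].
      * exact (continuous_at_C_Re p l z Hp). }
destruct (C1 (eps / 2) ltac:(lra)) as [d1 [Hd1 H1]].
destruct (C2 (eps / 2) ltac:(lra)) as [d2 [Hd2 H2]].
exists (Rmin d1 d2). split; [apply Rmin_pos; lra|]. intros h Hh.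
assert (E : (z + h - z)%C = h) by ring.
specialize (H1 (z + h)%C ltac:(rewrite E; eapply Rlt_le_trans; [exact Hh|apply Rmin_l])).
specialize (H2 (z + h)%C ltac:(rewrite E; eapply Rlt_le_trans; [exact Hh|apply Rmin_r])).
eapply Rle_lt_trans; [apply Cmod_le_Re_Im|].
replace (Re (clog (p (z + h)%C) - clog (p z))%C)
  with (ln (dot (p (z + h)%C) (p (z + h)%C)) / 2 - ln (dot (p z) (p z)) / 2)
  by (unfold clog, Re; simpl; ring).
replace (Im (clog (p (z + h)%C) - clog (p z))%C)
  with (atan (Im (p (z + h)%C) / Re (p (z + h)%C)) - atan (Im (p z) / Re (p z)))
  by (unfold clog, Im; simpl; ring).
lra.
Qed.

(** * The weighted maximum principle *)

(* The exponent 7/4 < 2 makes |u|² W vanish at 0 when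
   u(0) = 0, and the factor e^{x²/100} makes the radial second-order
   condition at an interior maximum impossible (interior_max_algebra). *)
Definition weight (x : R) : R := exp (-(7/4) * ln x + x * x / 100).
Definition dlogW (x : R) : R := -(7/4) / x + x / 50.
Definition d2logW (x : R) : R := (7/4) / (x * x) + 1 / 50.

Lemma weight_pos x : 0 < weight x.
Proof. apply exp_pos. Qed.

Lemma is_derive_weight x : 0 < x -> is_derive weight x (weight x * dlogW x).
Proof. intros Hx. unfold weight, dlogW. auto_derive; [repeat split; lra|unfold Rdiv; field; lra]. Qed.

Lemma is_derive_weight_dlogW x : 0 < x ->
  is_derive (fun y => weight y * dlogW y) x (weight x * (dlogW x * dlogW x + d2logW x)).
Proof. intros Hx. unfold weight, dlogW, d2logW. auto_derive; [repeat split; lra|unfold Rdiv; field; lra]. Qed.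

Lemma sq_times_weight_bound r : 0 < r < 1 ->
  r * r * weight r <= exp (1/100) * exp (ln r / 4).
Proof.
intros Hr. unfold weight.
replace (r * r) with (exp (ln r) * exp (ln r)) at 1 by (rewrite exp_ln; lra).
rewrite <- !exp_plus. apply Rlt_le, exp_increasing.
assert (r * r / 100 < 1 / 100) by nra. lra.
Qed.

Definition weighted_sq (u : C -> C) (w : C) : R := dot (u w) (u w) * weight (Cmod w).

Lemma weighted_sq_linear_bound (u : C -> C) Cc w : 0 < Cmod w < 1 ->
  Cmod (u w) <= Cc * Cmod w ->
  weighted_sq u w <= Cc * Cc * exp (1/100) * exp (ln (Cmod w) / 4).
Proof.
intros Hr Hub. unfold weighted_sq. rewrite dot_Cmod. set (r := Cmod w) in *.
pose proof (Cmod_ge_0 (u w)). pose proof (weight_pos r).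
pose proof (sq_times_weight_bound r Hr) as Hsq.
assert (E : Cmod (u w) ^ 2 * weight r <= Cc * Cc * (r * r * weight r)).
{ replace (Cc * Cc * (r * r * weight r)) with ((Cc * r)^2 * weight r) by ring.
  apply Rmult_le_compat_r; [lra|]. apply pow_incr. lra. }
assert (0 <= Cc * Cc) by nra.
replace (Cc * Cc * exp (1/100) * exp (ln r / 4))
  with (Cc * Cc * (exp (1/100) * exp (ln r / 4))) by ring.
eapply Rle_trans; [exact E|]. apply Rmult_le_compat_l; lra.
Qed.

(* Φ is continuous at 0 when u(0) = 0: there Φ(w) = O(|w|^{1/4}). *)
Lemma weighted_sq_continuous_at_0 (u : C -> C) l :
  is_derive_C u (RtoC 0) l -> u (RtoC 0) = RtoC 0 -> continuous_at_C (weighted_sq u) (RtoC 0).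
Proof.
intros Hd H0 eps Heps.
destruct (is_derive_C_little_o u (RtoC 0) l Hd 1 Rlt_0_1) as [d0 [Hd0 Hdd0]].
set (Cc := Cmod l + 1). assert (HC : 0 < Cc) by (unfold Cc; pose proof (Cmod_ge_0 l); lra).
set (K := Cc * Cc * exp (1/100) + 1).
assert (HK : 0 < K) by (unfold K; pose proof (exp_pos (1/100)); nra).
exists (Rmin (Rmin d0 1) (exp (4 * ln (eps / K)))).
split; [apply Rmin_pos; [apply Rmin_pos; lra|apply exp_pos]|].
intros w Hw. replace (w - RtoC 0)%C with w in Hw by ring.
pose proof (Rmin_l (Rmin d0 1) (exp (4 * ln (eps / K)))).
pose proof (Rmin_r (Rmin d0 1) (exp (4 * ln (eps / K)))).
pose proof (Rmin_l d0 1). pose proof (Rmin_r d0 1).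
assert (HPhi0 : weighted_sq u (RtoC 0) = 0) by (unfold weighted_sq, dot; rewrite H0; simpl; ring).
rewrite HPhi0, Rminus_0_r, Rabs_pos_eq
  by (apply Rmult_le_pos; [apply dot_nonneg|apply Rlt_le, weight_pos]).
destruct (Req_dec (Cmod w) 0) as [Zw|NZw].
{ apply Cmod_eq_0 in Zw. rewrite Zw, HPhi0. exact Heps. }
assert (Hr : 0 < Cmod w < 1) by (pose proof (Cmod_ge_0 w); lra).
assert (Hub : Cmod (u w) <= Cc * Cmod w).
{ specialize (Hdd0 w ltac:(lra)). rewrite Cplus_0_l, H0 in Hdd0.
  replace (u w) with ((u w - RtoC 0 - w * l) + w * l)%C by ring.
  eapply Rle_trans; [apply Cmod_triangle|]. rewrite Cmod_mult.
  unfold Cc. pose proof (Cmod_ge_0 w). nra. }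
assert (Hsmall : exp (ln (Cmod w) / 4) < eps / K).
{ rewrite <- (exp_ln (eps / K)) by (apply Rdiv_lt_0_compat; lra).
  apply exp_increasing. assert (Hw2 : Cmod w < exp (4 * ln (eps / K))) by lra.
  apply ln_increasing in Hw2; [|lra]. rewrite ln_exp in Hw2. lra. }
eapply Rle_lt_trans; [exact (weighted_sq_linear_bound u Cc w Hr Hub)|].
pose proof (exp_pos (1/100)). pose proof (exp_pos (ln (Cmod w) / 4)).
apply (Rle_lt_trans _ (K * exp (ln (Cmod w) / 4))).
- apply Rmult_le_compat_r; [lra|unfold K; lra].
- replace eps with (K * (eps / K)) by (field; lra). apply Rmult_lt_compat_l; lra.
Qed.

Lemma weighted_sq_continuous (u u1 : C -> C) z :
  (forall w, Cmod w < 1 -> is_derive_C u w (u1 w)) -> u (RtoC 0) = RtoC 0 -> Cmod z < 1 ->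
  continuous_at_C (weighted_sq u) z.
Proof.
intros Hu H0 Hz. destruct (Req_dec (Cmod z) 0) as [Z|NZ].
{ apply Cmod_eq_0 in Z. subst z.
  apply (weighted_sq_continuous_at_0 u (u1 (RtoC 0))); [apply Hu; rewrite Cmod_0; lra|exact H0]. }
apply (continuous_at_C_ext (fun w => (fun x => x^2) (Cmod (u w)) * weight (Cmod w))).
{ intros w. unfold weighted_sq. rewrite dot_Cmod. reflexivity. }
apply continuous_at_C_mult.
- apply (continuous_at_C_comp (fun x => x^2) (fun w => Cmod (u w))).
  + apply derivable_continuous_pt. exists (2 * Cmod (u z) ^ 1). apply derivable_pt_lim_pow.
  + exact (continuous_at_C_norm u (u1 z) z (Hu z Hz)).
- apply (continuous_at_C_comp weight Cmod); [|apply continuous_at_C_Cmod].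
  apply derivable_continuous_pt. exists (weight (Cmod z) * dlogW (Cmod z)).
  apply is_derive_Reals, is_derive_weight. pose proof (Cmod_ge_0 z); lra.
Qed.

(* At a maximizer on the boundary circle |w| = ρ: the radial condition
   2X/ρ + N ω(ρ) ≥ 0 gives X ≥ 0.865 N; the angular conditions X² = N P,
   P ≤ X + Y give (a1 - a2) X ≤ a1 X + a2 Y = ⟨u, q⟩ ≤ √N |q| < √N E;
   hence E² · 0.865 N < √N E, i.e. N < 1/(0.865 E)² < 1/5. *)
Lemma boundary_max_algebra N X Y P Q E rho a1 a2 :
  0 < N -> 0 < rho <= 1 -> X * X = N * P -> P - X - Y <= 0 ->
  0 <= 2 * X / rho + N * dlogW rho ->
  (a1 * X + a2 * Y)^2 <= N * Q -> Q < E * E -> E * E <= a1 - a2 -> 0 < a2 -> 26/10 <= E ->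
  N < 1/5.
Proof.
intros HN Hr HXP HT HR HS HQ HE Ha2 HE2.
unfold dlogW in HR.
assert (H1 : 0 <= X + N * (- (7/8) + rho * rho / 100)).
{ apply (Rmult_le_compat_l (rho / 2)) in HR; [|lra].
  rewrite Rmult_0_r in HR.
  replace (rho / 2 * (2 * X / rho + N * (- (7 / 4) / rho + rho / 50)))
    with (X + N * (- (7/8) + rho * rho / 100)) in HR by (field; lra).
  exact HR. }
assert (Hrr : rho * rho <= 1) by nra. assert (HNr : N * (rho * rho) <= N) by nra.
assert (HX : X >= 865/1000 * N) by nra.
assert (HP : 0 <= P) by nra.
assert (HSX : a1 * X + a2 * Y >= (E * E) * X) by nra.
assert (HS2 : a1 * X + a2 * Y >= (E * E) * (865/1000 * N)) by nra.
assert (HEE : E * E >= 676/100) by nra.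
assert (Hpos : (E * E) * (865/1000 * N) > 0) by nra.
assert (HS3 : ((E * E) * (865/1000 * N))^2 <= N * Q) by nra.
assert (HS4 : ((E * E) * (865/1000 * N))^2 < N * (E * E)) by nra.
assert (HS5 : (E * E) * (865/1000)^2 * N < 1).
{ apply (Rmult_lt_reg_l (N * (E * E))); [nra|]. nra. }
nra.
Qed.

(* At an interior maximizer the radial conditions g'(ρ) = 0, g''(ρ) ≤ 0
   for g = |u|² W along the ray are incompatible with the angular ones:
   substituting them, g''(ρ)/W(ρ) ≥ N/25 > 0. *)
Lemma interior_max_algebra N X Y P rho :
  0 < N -> 0 < rho -> X * X = N * P -> P - X - Y <= 0 ->
  2 * X / rho + N * dlogW rho = 0 ->
  2 * (P + Y) / (rho * rho) + 2 * (2 * X / rho) * dlogW rho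
    + N * (dlogW rho * dlogW rho + d2logW rho) <= 0 ->
  False.
Proof.
intros HN Hr HXP HT H1 H2.
set (w := dlogW rho) in *.
assert (E2 : 2 * X / rho = - (N * w)) by lra.
assert (HX : X = - rho * w * N / 2).
{ assert (2 * X = - (N * w) * rho) by (rewrite <- E2; field; lra). lra. }
assert (HP : P = X * X / N) by (rewrite HXP; field; lra).
assert (H3 : 2 * (P + Y) / (rho * rho) >= 2 * (2 * P - X) / (rho * rho)).
{ unfold Rdiv. apply Rle_ge. apply Rmult_le_compat_r; [|lra].
  apply Rlt_le, Rinv_0_lt_compat; nra. }
assert (H4 : 2 * (2 * P - X) / (rho * rho) + 2 * (2 * X / rho) * w
               + N * (w * w + d2logW rho) = N / 25).
{ rewrite HP, HX. unfold w, dlogW, d2logW. field. split; lra. }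
lra.
Qed.

Definition mixed_term (u u1 : C -> C) (z : C) : R := dot (u z) (z * u1 z)%C.
Definition curv_term (u u2 : C -> C) (z : C) : R := dot (u z) (z * z * u2 z)%C.
Definition speed_term (u1 : C -> C) (z : C) : R := dot (z * u1 z)%C (z * u1 z)%C.

Lemma is_derive_angular (u u1 : C -> C) r t : 0 <= r < 1 ->
  (forall w, Cmod w < 1 -> is_derive_C u w (u1 w)) ->
  is_derive (fun s => dot (u (pol r s)) (u (pol r s))) t
    (2 * dot (u (pol r t)) (Ci * pol r t * u1 (pol r t))%C).
Proof.
intros Hr Hu. apply is_derive_dot_self, path_deriv_comp; [apply Hu, pol_in_disk, Hr|].
apply path_deriv_pol_angle.
Qed.

Lemma is_derive_angular_2 (u u1 u2 : C -> C) r t : 0 <= r < 1 ->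
  (forall w, Cmod w < 1 -> is_derive_C u w (u1 w)) ->
  (forall w, Cmod w < 1 -> is_derive_C u1 w (u2 w)) ->
  is_derive (fun s => 2 * dot (u (pol r s)) (Ci * pol r s * u1 (pol r s))%C) t
    (2 * (speed_term u1 (pol r t) - mixed_term u u1 (pol r t) - curv_term u u2 (pol r t))).
Proof.
intros Hr Hu Hu1. set (z := pol r t).
assert (Ha : path_deriv (fun s => u (pol r s)) t (Ci * z * u1 z)%C).
{ apply path_deriv_comp; [apply Hu, pol_in_disk, Hr|apply path_deriv_pol_angle]. }
assert (Hb : path_deriv (fun s => u1 (pol r s)) t (Ci * z * u2 z)%C).
{ apply path_deriv_comp; [apply Hu1, pol_in_disk, Hr|apply path_deriv_pol_angle]. }
pose proof (path_deriv_mult _ _ t _ _ (path_deriv_scal Ci _ t _ (path_deriv_pol_angle r t)) Hb)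
  as Hc.
pose proof (is_derive_dot _ _ t _ _ Ha Hc) as H. apply (is_derive_scal _ _ 2) in H. simpl in H.
match goal with |- is_derive _ _ ?d => replace d with
  (2 * (dot (Ci * z * u1 z)%C (Ci * pol r t * u1 (pol r t))%C
        + dot (u (pol r t)) (Ci * (Ci * z) * u1 (pol r t) + Ci * pol r t * (Ci * z * u2 z))%C))
end; [exact H|].
unfold speed_term, mixed_term, curv_term, z, dot, Re, Im, Ci; simpl. ring.
Qed.

(* At a maximum of t ↦ |u(r e^{it})|² (with u(z) written U, z = r e^{it}):
   ⟨U, i z u'⟩ = 0, which with Pythagoras gives X² = N P, and the second
   angular derivative P - X - Y is ≤ 0. *)
Lemma angular_max_conditions (u u1 u2 : C -> C) r t0 : 0 <= r < 1 ->
  (forall w, Cmod w < 1 -> is_derive_C u w (u1 w)) ->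
  (forall w, Cmod w < 1 -> is_derive_C u1 w (u2 w)) ->
  (forall t, Rabs (t - t0) < 1 ->
     dot (u (pol r t)) (u (pol r t)) <= dot (u (pol r t0)) (u (pol r t0))) ->
  (mixed_term u u1 (pol r t0))^2
    = dot (u (pol r t0)) (u (pol r t0)) * speed_term u1 (pol r t0) /\
  speed_term u1 (pol r t0) <= mixed_term u u1 (pol r t0) + curv_term u u2 (pol r t0).
Proof.
intros Hr Hu Hu1 Hmax.
set (g' := fun s => 2 * dot (u (pol r s)) (Ci * pol r s * u1 (pol r s))%C).
assert (Hg : forall t, Rabs (t - t0) < 1 ->
          is_derive (fun s => dot (u (pol r s)) (u (pol r s))) t (g' t))
  by (intros t _; apply is_derive_angular; assumption).
pose proof (deriv_zero_at_local_max _ g' t0 1 Rlt_0_1 Hg Hmax) as Hfirst.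
pose proof (second_deriv_nonpos_at_local_max _ g' t0 _ 1 Rlt_0_1 Hg
              (is_derive_angular_2 u u1 u2 r t0 Hr Hu Hu1) Hmax) as Hsecond.
split; [|lra].
set (z := pol r t0) in *. unfold g' in Hfirst.
pose proof (dot_rotation (u z) (z * u1 z)%C) as Hrot.
replace (dot (u z) (Ci * (z * u1 z))%C) with (dot (u z) (Ci * z * u1 z)%C) in Hrot
  by (unfold dot, Re, Im, Ci; simpl; ring).
assert (Horth : dot (u z) (Ci * z * u1 z)%C = 0) by (unfold z; lra).
rewrite Horth in Hrot. unfold mixed_term, speed_term. nra.
Qed.

Definition radial_profile (u : C -> C) t (s : R) : R :=
  dot (u (pol s t)) (u (pol s t)) * weight s.

Definition radial_deriv (u u1 : C -> C) t (s : R) : R :=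
  2 * dot (u (pol s t)) (pol 1 t * u1 (pol s t))%C * weight s
  + dot (u (pol s t)) (u (pol s t)) * (weight s * dlogW s).

Lemma is_derive_radial_profile (u u1 : C -> C) t s : 0 < s < 1 ->
  (forall w, Cmod w < 1 -> is_derive_C u w (u1 w)) ->
  is_derive (radial_profile u t) s (radial_deriv u u1 t s).
Proof.
intros Hs Hu. unfold radial_profile, radial_deriv.
apply (is_derive_mult (fun s => dot (u (pol s t)) (u (pol s t))) weight); [| |auto using Rmult_comm].
- apply is_derive_dot_self, path_deriv_comp; [apply Hu, pol_in_disk; lra|].
  apply path_deriv_pol_radius.
- apply is_derive_weight. lra.
Qed.

(* In terms of z = s e^{it} = s ζ: ⟨u, ζ u'⟩ = X/s, and so on. *)
Lemma radial_deriv_value (u u1 : C -> C) t s : 0 < s ->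
  radial_deriv u u1 t s = weight s *
    (2 * mixed_term u u1 (pol s t) / s + dot (u (pol s t)) (u (pol s t)) * dlogW s).
Proof.
intros Hs. unfold radial_deriv, mixed_term.
set (z := pol s t). set (zeta := pol 1 t).
replace (z * u1 z)%C with (RtoC s * (zeta * u1 z))%C
  by (unfold z, zeta; rewrite (pol_scal s t); ring).
rewrite dot_scal_r. field. lra.
Qed.

Lemma is_derive_radial_deriv (u u1 u2 : C -> C) t s : 0 < s < 1 ->
  (forall w, Cmod w < 1 -> is_derive_C u w (u1 w)) ->
  (forall w, Cmod w < 1 -> is_derive_C u1 w (u2 w)) ->
  is_derive (radial_deriv u u1 t) s (weight s *
    (2 * (speed_term u1 (pol s t) + curv_term u u2 (pol s t)) / (s * s)
     + 2 * (2 * mixed_term u u1 (pol s t) / s) * dlogW s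
     + dot (u (pol s t)) (u (pol s t)) * (dlogW s * dlogW s + d2logW s))).
Proof.
intros Hs Hu Hu1. unfold radial_deriv. set (zeta := pol 1 t).
assert (Ha : forall s, 0 < s < 1 ->
          path_deriv (fun s => u (pol s t)) s (zeta * u1 (pol s t))%C).
{ intros s' Hs'. apply path_deriv_comp; [apply Hu, pol_in_disk; lra|].
  apply path_deriv_pol_radius. }
assert (Hb : path_deriv (fun s => u1 (pol s t)) s (zeta * u2 (pol s t))%C).
{ apply path_deriv_comp; [apply Hu1, pol_in_disk; lra|apply path_deriv_pol_radius]. }
match goal with |- is_derive _ _ ?d => replace d with
  ((2 * (dot (zeta * u1 (pol s t)) (zeta * u1 (pol s t))
         + dot (u (pol s t)) (zeta * (zeta * u2 (pol s t))))) * weight s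
    + 2 * dot (u (pol s t)) (zeta * u1 (pol s t)) * (weight s * dlogW s)
   + (2 * dot (u (pol s t)) (zeta * u1 (pol s t)) * (weight s * dlogW s)
    + dot (u (pol s t)) (u (pol s t)) * (weight s * (dlogW s * dlogW s + d2logW s))))%R
end.
- apply (is_derive_plus (fun s => 2 * dot (u (pol s t)) (zeta * u1 (pol s t))%C * weight s)
                        (fun s => dot (u (pol s t)) (u (pol s t)) * (weight s * dlogW s))).
  + apply (is_derive_mult (fun s => 2 * dot (u (pol s t)) (zeta * u1 (pol s t))%C) weight);
      [|apply is_derive_weight; lra|auto using Rmult_comm].
    apply (is_derive_scal (fun s => dot (u (pol s t)) (zeta * u1 (pol s t))%C) s 2).
    apply is_derive_dot; [apply Ha, Hs|apply path_deriv_scal, Hb].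
  + apply (is_derive_mult (fun s => dot (u (pol s t)) (u (pol s t)))
                          (fun s => weight s * dlogW s));
      [apply is_derive_dot_self, Ha, Hs|apply is_derive_weight_dlogW; lra|auto using Rmult_comm].
- unfold speed_term, mixed_term, curv_term. set (z := pol s t).
  replace (z * u1 z)%C with (RtoC s * (zeta * u1 z))%C
    by (unfold z, zeta; rewrite (pol_scal s t); ring).
  replace (z * z * u2 z)%C with (RtoC (s * s) * (zeta * (zeta * u2 z)))%C
    by (unfold z, zeta; rewrite (pol_scal s t); apply injective_projections; simpl; ring).
  rewrite dot_scal_l, !dot_scal_r. field. lra.
Qed.

(* Φ attains its maximum over each closed disk |w| ≤ r < 1, at some
   r1 e^{i t1}: apply the extreme value theorem in polar coordinates. *)
Lemma weighted_sq_maximizer (u u1 : C -> C) r : 0 < r < 1 ->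
  (forall w, Cmod w < 1 -> is_derive_C u w (u1 w)) -> u (RtoC 0) = RtoC 0 ->
  exists r1 t1, 0 <= r1 <= r /\
    forall w, Cmod w <= r -> weighted_sq u w <= weighted_sq u (pol r1 t1).
Proof.
intros Hr Hu H0.
destruct (extreme_value_rectangle (fun x y => weighted_sq u (pol (clamp r x) y)) 0 r 0 (2 * PI))
  as [r1 [t1 [Hr1 [_ Hmax]]]]; [lra|pose proof PI_RGT_0; lra| |].
{ apply polar_jointly_continuous; [lra|]. intros w Hw.
  apply (weighted_sq_continuous u u1); auto; lra. }
exists r1, t1. split; [exact Hr1|]. intros w Hw.
rewrite (clamp_id r r1 Hr1) in Hmax.
destruct (Req_dec (Cmod w) 0) as [Z|NZ].
- apply Cmod_eq_0 in Z. subst w.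
  replace (RtoC 0) with (pol (clamp r 0) 0) by (rewrite clamp_id by lra; apply pol_zero).
  apply Hmax; pose proof PI_RGT_0; lra.
- pose proof (Cmod_ge_0 w).
  destruct (polar_representation w) as [t [Ht Ew]]; [lra|].
  rewrite Ew, <- (clamp_id r (Cmod w)) by lra. apply Hmax; lra.
Qed.

Lemma weighted_sq_pol (u : C -> C) r t : 0 <= r ->
  weighted_sq u (pol r t) = dot (u (pol r t)) (u (pol r t)) * weight r.
Proof. intros Hr. unfold weighted_sq. rewrite Cmod_pol, Rabs_pos_eq by lra. reflexivity. Qed.

Definition q_term (u1 u2 : C -> C) (a1 a2 : R) (w : C) : C :=
  (RtoC a1 * w * u1 w + RtoC a2 * (w * w) * u2 w)%C.

Lemma boundary_max_bound (u u1 u2 : C -> C) a1 a2 r t0 :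
  0 < a2 -> exp 2 <= a1 - a2 -> 0 < r < 1 ->
  (forall w, Cmod w < 1 -> is_derive_C u w (u1 w)) ->
  (forall w, Cmod w < 1 -> is_derive_C u1 w (u2 w)) ->
  Cmod (q_term u1 u2 a1 a2 (pol r t0)) < exp 1 ->
  0 < dot (u (pol r t0)) (u (pol r t0)) ->
  (forall t, Rabs (t - t0) < 1 ->
     dot (u (pol r t)) (u (pol r t)) <= dot (u (pol r t0)) (u (pol r t0))) ->
  (forall s, 0 < s <= r -> radial_profile u t0 s <= radial_profile u t0 r) ->
  dot (u (pol r t0)) (u (pol r t0)) < 1/5.
Proof.
intros Ha2 Ha Hr Hu Hu1 Hq HN Hang Hrad.
destruct (angular_max_conditions u u1 u2 r t0 ltac:(lra) Hu Hu1 Hang) as [HXP HT].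
set (z := pol r t0) in *. set (q := q_term u1 u2 a1 a2 z) in *.
assert (Hradial : 0 <= radial_deriv u u1 t0 r).
{ apply (deriv_nonneg_at_left_max (radial_profile u t0) r _ r); [lra| |].
  - apply is_derive_radial_profile; [lra|exact Hu].
  - intros h Hh. apply Hrad. lra. }
rewrite radial_deriv_value in Hradial by lra. fold z in Hradial.
pose proof (weight_pos r) as HW.
assert (HdUq : dot (u z) q = a1 * mixed_term u u1 z + a2 * curv_term u u2 z)
  by (unfold q, q_term, mixed_term, curv_term, dot, Re, Im, RtoC; simpl; ring).
assert (Hqq : dot q q < exp 1 * exp 1).
{ rewrite dot_Cmod. pose proof (Cmod_ge_0 q). simpl. nra. }
apply (boundary_max_algebra _ (mixed_term u u1 z) (curv_term u u2 z) (speed_term u1 z)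
         (dot q q) (exp 1) r a1 a2); try lra.
- apply (Rmult_le_reg_l (weight r)); lra.
- rewrite <- HdUq. apply dot_cauchy_schwarz.
- rewrite <- exp_plus. replace (1 + 1) with 2 by ring. exact Ha.
- apply exp_1_lower_bound.
Qed.

Lemma no_interior_max (u u1 u2 : C -> C) r1 r t0 : 0 < r1 < r -> r < 1 ->
  (forall w, Cmod w < 1 -> is_derive_C u w (u1 w)) ->
  (forall w, Cmod w < 1 -> is_derive_C u1 w (u2 w)) ->
  0 < dot (u (pol r1 t0)) (u (pol r1 t0)) ->
  (forall t, Rabs (t - t0) < 1 ->
     dot (u (pol r1 t)) (u (pol r1 t)) <= dot (u (pol r1 t0)) (u (pol r1 t0))) ->
  (forall s, 0 < s <= r -> radial_profile u t0 s <= radial_profile u t0 r1) ->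
  False.
Proof.
intros Hr1 Hr Hu Hu1 HN Hang Hrad.
destruct (angular_max_conditions u u1 u2 r1 t0 ltac:(lra) Hu Hu1 Hang) as [HXP HT].
set (del := Rmin r1 (r - r1)).
assert (Hdel : 0 < del) by (unfold del; apply Rmin_pos; lra).
assert (Hnear : forall s, Rabs (s - r1) < del -> 0 < s <= r /\ s < 1).
{ intros s Hs. apply Rabs_def2 in Hs. unfold del in Hs.
  pose proof (Rmin_l r1 (r - r1)). pose proof (Rmin_r r1 (r - r1)). lra. }
assert (Hg : forall s, Rabs (s - r1) < del ->
          is_derive (radial_profile u t0) s (radial_deriv u u1 t0 s)).
{ intros s Hs. apply is_derive_radial_profile; [|exact Hu]. apply Hnear in Hs. lra. }
assert (Hmax : forall s, Rabs (s - r1) < del ->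
          radial_profile u t0 s <= radial_profile u t0 r1)
  by (intros s Hs; apply Hrad, Hnear, Hs).
pose proof (deriv_zero_at_local_max _ _ r1 del Hdel Hg Hmax) as Hfirst.
pose proof (second_deriv_nonpos_at_local_max _ _ r1 _ del Hdel Hg
              (is_derive_radial_deriv u u1 u2 t0 r1 ltac:(lra) Hu Hu1) Hmax) as Hsecond.
rewrite radial_deriv_value in Hfirst by lra.
pose proof (weight_pos r1) as HW.
set (N := dot (u (pol r1 t0)) (u (pol r1 t0))) in *.
set (X := mixed_term u u1 (pol r1 t0)) in *.
set (Y := curv_term u u2 (pol r1 t0)) in *.
set (P := speed_term u1 (pol r1 t0)) in *.
apply (interior_max_algebra N X Y P r1); try lra.
- apply (Rmult_eq_reg_l (weight r1)); lra.
- apply (Rmult_le_reg_l (weight r1)); lra.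
Qed.

Lemma sq_modulus_bound (u u1 u2 : C -> C) (a1 a2 : R) :
  0 < a2 -> exp 2 <= a1 - a2 ->
  (forall w, Cmod w < 1 -> is_derive_C u w (u1 w)) ->
  (forall w, Cmod w < 1 -> is_derive_C u1 w (u2 w)) ->
  u (RtoC 0) = RtoC 0 ->
  (forall w, Cmod w < 1 -> Cmod (q_term u1 u2 a1 a2 w) < exp 1) ->
  forall z, Cmod z < 1 -> dot (u z) (u z) < 1/5.
Proof.
intros Ha2 Ha Hu Hu1 H0 Hq z Hz.
destruct (Req_dec (Cmod z) 0) as [Z|NZ].
{ apply Cmod_eq_0 in Z. rewrite Z, H0. unfold dot; simpl; lra. }
set (r := Cmod z) in *.
assert (Hr : 0 < r < 1) by (pose proof (Cmod_ge_0 z); unfold r in *; lra).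
destruct (weighted_sq_maximizer u u1 r Hr Hu H0) as [r1 [t1 [Hr1 Hmax]]].
set (N1 := dot (u (pol r1 t1)) (u (pol r1 t1))).
assert (HPhi1 : weighted_sq u (pol r1 t1) = N1 * weight r1) by (apply weighted_sq_pol; lra).
assert (Hz_le : dot (u z) (u z) * weight r <= N1 * weight r1)
  by (rewrite <- HPhi1; apply Hmax; unfold r; lra).
pose proof (weight_pos r) as HWr. pose proof (weight_pos r1) as HWr1.
pose proof (dot_nonneg (u z)) as Hdz.
destruct (Rle_lt_dec N1 0) as [Hle|HN1]; [nra|].
assert (Hr1p : 0 < r1).
{ destruct (Req_dec r1 0) as [E|E]; [|lra]. exfalso. unfold N1 in HN1.
  rewrite E, pol_zero, H0 in HN1. unfold dot in HN1; simpl in HN1. lra. }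
assert (Hang : forall t, Rabs (t - t1) < 1 -> dot (u (pol r1 t)) (u (pol r1 t)) <= N1).
{ intros t _. apply (Rmult_le_reg_r (weight r1)); [exact HWr1|].
  rewrite <- weighted_sq_pol, <- HPhi1 by lra. apply Hmax.
  rewrite Cmod_pol, Rabs_pos_eq; lra. }
assert (Hrad : forall s, 0 < s <= r -> radial_profile u t1 s <= radial_profile u t1 r1).
{ intros s Hs. unfold radial_profile. rewrite <- !weighted_sq_pol by lra.
  apply Hmax. rewrite Cmod_pol, Rabs_pos_eq; lra. }
destruct (Rle_lt_dec r r1) as [Hb|Hi].
- assert (Er : r1 = r) by lra. subst N1. rewrite Er in *.
  pose proof (boundary_max_bound u u1 u2 a1 a2 r t1 Ha2 Ha Hr Hu Hu1
                (Hq _ (pol_in_disk r t1 ltac:(lra))) HN1 Hang Hrad).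
  nra.
- exfalso. apply (no_interior_max u u1 u2 r1 r t1); auto; lra.
Qed.

Lemma is_derive_C_sub_const (f : C -> C) c z l :
  is_derive_C f z l -> is_derive_C (fun w => f w - c)%C z l.
Proof.
intros Hf. apply is_derive_C_of_little_o. intros eps Heps.
destruct (is_derive_C_little_o f z l Hf eps Heps) as [d [Hd Hdd]].
exists d; split; auto. intros h Hh.
replace (f (z + h)%C - c - (f z - c) - h * l)%C with (f (z + h)%C - f z - h * l)%C by ring.
apply Hdd, Hh.
Qed.

Lemma Cmod_mul_cexp_lt v : Cmod v < 1 -> Cmod (v * cexp v)%C < exp 1.
Proof.
intros Hv. rewrite Cmod_mult, Cmod_cexp.
assert (HR : Re v < 1) by (pose proof (re_le_Cmod v); pose proof (Rle_abs (Re v)); lra).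
apply exp_increasing in HR. pose proof (Cmod_ge_0 v). pose proof (exp_pos (Re v)). nra.
Qed.

Lemma clog_comp_holomorphic (p p1 : C -> C) :
  (forall z, in_disk z -> is_derive_C p z (p1 z)) ->
  (forall z, in_disk z -> 0 < Re (p z)) ->
  holo_on_disk (fun z => clog (p z)).
Proof.
intros Hp Hre z Hz. unfold in_disk in *. exists (p1 z / p z)%C.
apply (is_derive_C_log p (fun z => clog (p z)) z (p1 z) (1 - Cmod z)); [lra| | | |].
- intros h Hh. apply cexp_clog, Hre.
  eapply Rle_lt_trans; [apply Cmod_triangle|]. lra.
- apply Hp, Hz.
- intros E. specialize (Hre z Hz). rewrite E in Hre. simpl in Hre. lra.
- apply (clog_comp_continuous p (p1 z)); [apply Hp, Hz|apply Hre, Hz].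
Qed.

Theorem theorem4p8 (a1 a2 : R) (p p1 p2 : C -> C) :
  0 < a1 -> 0 < a2 -> exp 2 <= a1 - a2 ->
  (* p analytic on D with p' = p1 and p'' = p2 on D *)
  (forall z, in_disk z -> @is_derive C_AbsRing C_NormedModule p z (p1 z)) ->
  (forall z, in_disk z -> @is_derive C_AbsRing C_NormedModule p1 z (p2 z)) ->
  p (RtoC 0) = RtoC 1 ->
  subordinate
    (fun z => (RtoC 1 + RtoC a1 * z * p1 z + RtoC a2 * (z * z) * p2 z)%C)
    (fun z => (RtoC 1 + z * cexp z)%C) ->
  subordinate p cexp.
Proof.
intros _ Ha2 Hae Hp Hp1 Hp0 [w [_ [Hw_disk [_ Hw_eq]]]].
set (u := fun z => (p z - RtoC 1)%C).
assert (Hu : forall z, Cmod z < 1 -> is_derive_C u z (p1 z))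
  by (intros z Hz; apply is_derive_C_sub_const, Hp, Hz).
assert (Hu0 : u (RtoC 0) = RtoC 0) by (unfold u; rewrite Hp0; ring).
assert (Hq : forall z, Cmod z < 1 -> Cmod (q_term p1 p2 a1 a2 z) < exp 1).
{ intros z Hz. pose proof (Hw_eq z Hz) as E. cbv beta in E.
  replace (q_term p1 p2 a1 a2 z) with (w z * cexp (w z))%C.
  - apply Cmod_mul_cexp_lt, Hw_disk, Hz.
  - transitivity (RtoC 1 + w z * cexp (w z) - RtoC 1)%C; [ring|].
    rewrite <- E. unfold q_term. ring. }
assert (Hdisk : forall z, Cmod z < 1 -> (Re (p z) - 1)^2 + (Im (p z))^2 < 1/5).
{ intros z Hz. pose proof (sq_modulus_bound u p1 p2 a1 a2 Ha2 Hae Hu Hp1 Hu0 Hq z Hz) as H.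
  unfold u, dot, Re, Im in H |- *. simpl in H |- *. lra. }
assert (Hre : forall z, Cmod z < 1 -> 0 < Re (p z))
  by (intros z Hz; destruct (small_disk_about_1 _ _ (Hdisk z Hz)); lra).
exists (fun z => clog (p z)). repeat split.
- exact (clog_comp_holomorphic p p1 Hp Hre).
- intros z Hz. apply Cmod_clog_lt_1, Hdisk, Hz.
- rewrite Hp0. apply clog_1.
- intros z Hz. symmetry. apply cexp_clog, Hre, Hz.
Qed.
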